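(* Let $f(z)=\sum_{k\ge0}a_kz^k$ be an entire transcendental function, let $a_{n_0}$ be its first nonzero coefficient, let $M(r)=\max_{\theta}|f(re^{i\theta})|$, and for $n>n_0$ let $r_\diamond(n)=\operatorname{argmin}_{r>0}r^{-n}M(r)$ (the unique minimizer). Then $r_\diamond(n)\le r_\diamond(n+1)$ for $n>n_0$, and $\lim_{n\to\infty}r_\diamond(n)=\infty$. *)

From Stdlib Require Import Reals.
From Coquelicot Require Import Coquelicot.
Open Scope R_scope.

(* The power series f(z) = sum_k a_k z^k (value of the series), computed
   componentwise (real and imaginary parts), since Coquelicot's [Series]
   is real-valued; this is the complex sum whenever the series converges. *)
Definition pser (a : nat -> C) (z : C) : C :=
  (Series (fun k => fst (Cmult (a k) (Cpow z k))),
   Series (fun k => snd (Cmult (a k) (Cpow z k)))).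

Definition entire_coeffs (a : nat -> C) : Prop :=
  forall z : C, @ex_series C_AbsRing C_NormedModule (fun k => Cmult (a k) (Cpow z k)).

Definition transcendental_coeffs (a : nat -> C) : Prop :=
  forall N : nat, exists k : nat, (N <= k)%nat /\ a k <> 0%C.

Definition first_nonzero (a : nat -> C) (n0 : nat) : Prop :=
  a n0 <> 0%C /\ forall k : nat, (k < n0)%nat -> a k = 0%C.

(* M(r) = max_theta |f(r e^{i theta})|  (taken as the supremum, which is attained). *)
Definition maxmod (a : nat -> C) (r : R) : R :=
  real (Lub_Rbar (fun y : R => exists theta : R,
          y = Cmod (pser a (r * cos theta, r * sin theta)))).

Definition is_rdiamond (a : nat -> C) (n : nat) (r : R) : Prop :=
  0 < r /\ forall s : R, 0 < s -> maxmod a r / r ^ n <= maxmod a s / s ^ n.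

From Stdlib Require Import Reals Lra Lia Classical Arith.
From Coquelicot Require Import Coquelicot.
Open Scope R_scope.

(* Write [g_n(r) = M(r) / r^n].  Cauchy's estimates [|a_k| r^k <= M(r)], obtained by averaging
   [f] over roots of unity, make [g_n] blow up at [0] (through [a_n0]) and at infinity (through
   some [a_k], [k > n]), so the continuous [g_n] attains its minimum.  Comparing the minimality
   of [r_n] for [g_n] with that of [r_(n+1)] for [g_(n+1)] gives [r_n <= r_(n+1)], and the bound
   [|a_n0| 2^n s^n0 <= M(2 s)] for [r_n <= s] forbids the [r_n] to stay bounded.

   Two minimizers [r1 < r2] would give an interior maximum [r0] of [g_n] on [[r1, r2]].  Taking
   [|z0| = r0] with [|f(z0)| = M(r0)] and [c = f(z0) / z0^n], one gets [|f(z)| <= |c| |z|^n] on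
   the annulus [r1 <= |z| <= r2].  If [f - c z^n] had a zero of finite order at [z0], moving in
   a suitable direction from [z0] would make [|f|] exceed [|c| |z|^n]; so the zero has infinite
   order, which Cauchy's estimates for the successive quotients by [z - z0] rule out, since
   [f - c z^n] is not identically zero. *)

Definition coef_bound (a : nat -> C) (rho B : R) : Prop :=
  forall k, Cmod (a k) * rho ^ k <= B.

Definition coefs_bounded (a : nat -> C) : Prop :=
  forall rho, 0 <= rho -> exists B, coef_bound a rho B.

Lemma coef_bound_nonneg a rho B : coef_bound a rho B -> 0 <= B.
Proof.
  intros H. specialize (H O). simpl in H. generalize (Cmod_ge_0 (a O)). lra.
Qed.

Lemma bounded_of_eventually_le (u : nat -> R) (N : nat) (c : R) :
  (forall k, (N <= k)%nat -> u k <= c) -> exists B, forall k, u k <= B.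
Proof.
  revert u; induction N as [|N IH]; intros u H.
  - exists c. intros k. apply H. lia.
  - destruct (IH (fun k => if Nat.eq_dec k N then c else u k)) as [B HB].
    { intros k Hk. destruct (Nat.eq_dec k N); [lra|]. apply H. lia. }
    exists (Rmax B (u N)). intros k. destruct (Nat.eq_dec k N) as [->|Hk].
    + apply Rmax_r.
    + specialize (HB k). destruct (Nat.eq_dec k N); [congruence|].
      eapply Rle_trans; [apply HB | apply Rmax_l].
Qed.

Lemma Cmod_RtoC_pow (rho : R) k : 0 <= rho -> Cmod (Cpow (RtoC rho) k) = rho ^ k.
Proof. intros H. rewrite Cmod_pow, Cmod_R, Rabs_pos_eq; auto. Qed.

Lemma entire_coefs_bounded (a : nat -> C) : entire_coeffs a -> coefs_bounded a.
Proof.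
  intros Ha rho Hrho.
  destruct (Ha (RtoC rho)) as [l Hl].
  destruct (proj1 (filterlim_locally _ _) Hl (mkposreal 1 Rlt_0_1)) as [N HN].
  (* Consecutive partial sums lie within 1 of the sum, so each term has modulus below [2 sqrt 2]. *)
  destruct (bounded_of_eventually_le
              (fun k => Cmod (a k) * rho ^ k) (S N) (2 * sqrt 2)) as [B HB].
  { intros [|k] Hk; [lia|].
    assert (H1 := HN k ltac:(lia)). assert (H2 := HN (S k) ltac:(lia)).
    apply ball_sym in H1.
    assert (H3 := C_NormedModule_mixin_compat2 _ _ (mkposreal (1 + 1) ltac:(lra))
                    (ball_triangle _ _ _ _ _ H1 H2)).
    simpl in H3. rewrite sum_Sn in H3.
    assert (E : forall x y : C, minus (plus x y) x = y)
      by (intros; unfold minus, plus, opp; simpl; ring).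
    rewrite E, Cmod_mult, Cmod_RtoC_pow in H3 by auto. lra. }
  exists B. exact HB.
Qed.

Lemma Series_tail_le (b : nat -> R) (B x : R) N : 0 <= x <= 1/2 ->
  (forall k, Rabs (b k) <= B * x ^ k) ->
  Rabs (Series b - sum_n b N) <= 2 * B * x ^ S N.
Proof.
  intros Hx Hb.
  assert (HB : 0 <= B) by (specialize (Hb O); simpl in Hb; generalize (Rabs_pos (b O)); lra).
  assert (Hgeom : ex_series (fun k => B * x ^ S N * x ^ k)).
  { apply (ex_series_scal_l (V := R_NormedModule)), ex_series_geom.
    rewrite Rabs_pos_eq; lra. }
  assert (Htail : forall k, Rabs (b (S N + k)%nat) <= B * x ^ S N * x ^ k)
    by (intros k; rewrite Rmult_assoc, <- pow_add; apply Hb).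
  assert (Hex : ex_series b).
  { apply (ex_series_incr_n b (S N)).
    apply (ex_series_le (V := R_CompleteNormedModule)) with (1 := Htail), Hgeom. }
  assert (Hexa : ex_series (fun k => Rabs (b (S N + k)%nat))).
  { apply (ex_series_le (V := R_CompleteNormedModule)) with (2 := Hgeom).
    intros k. change (norm (Rabs (b (S N + k)%nat))) with (Rabs (Rabs (b (S N + k)%nat))).
    rewrite Rabs_Rabsolu. apply Htail. }
  rewrite (Series_incr_n b (S N)) by (auto; lia). simpl pred.
  rewrite sum_n_Reals.
  replace (sum_f_R0 b N + Series (fun k => b (S N + k)%nat) - sum_f_R0 b N)
    with (Series (fun k => b (S N + k)%nat)) by ring.
  eapply Rle_trans; [apply Series_Rabs, Hexa|].
  eapply Rle_trans; [apply Series_le with (b := fun k => B * x ^ S N * x ^ k)|].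
  - intros k. split; [apply Rabs_pos | apply Htail].
  - exact Hgeom.
  - rewrite Series_scal_l, Series_geom by (rewrite Rabs_pos_eq; lra).
    assert (0 <= B * x ^ S N) by (apply Rmult_le_pos; auto; apply pow_le; lra).
    assert (/ (1 - x) <= 2) by (rewrite <- (Rinv_inv 2); apply Rinv_le_contravar; lra).
    nra.
Qed.

Fixpoint csum (f : nat -> C) (N : nat) : C :=
  match N with O => f O | S n => Cplus (csum f n) (f (S n)) end.

Lemma csum_fst f N : fst (csum f N) = sum_n (fun k => fst (f k)) N.
Proof. induction N; simpl; [now rewrite sum_O|]. now rewrite sum_Sn, IHN. Qed.

Lemma csum_snd f N : snd (csum f N) = sum_n (fun k => snd (f k)) N.
Proof. induction N; simpl; [now rewrite sum_O|]. now rewrite sum_Sn, IHN. Qed.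

Lemma csum_ext f g N : (forall k, f k = g k) -> csum f N = csum g N.
Proof. intros H. induction N; simpl; rewrite ?IHN, ?H; auto. Qed.

Lemma csum_plus f g N : csum (fun k => Cplus (f k) (g k)) N = Cplus (csum f N) (csum g N).
Proof. induction N; simpl; [auto|]. rewrite IHN. ring. Qed.

Lemma csum_minus f g N : csum (fun k => Cminus (f k) (g k)) N = Cminus (csum f N) (csum g N).
Proof. induction N; simpl; [auto|]. rewrite IHN. ring. Qed.

Lemma csum_scal c f N : csum (fun k => Cmult c (f k)) N = Cmult c (csum f N).
Proof. induction N; simpl; auto. rewrite IHN. ring. Qed.

Lemma csum_eq_0 f N : (forall k, (k <= N)%nat -> f k = RtoC 0) -> csum f N = RtoC 0.
Proof. induction N; intros H; simpl; [apply H; lia|]. rewrite IHN, H by (auto; lia). ring. Qed.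

Lemma csum_single (v : C) m N : (m <= N)%nat ->
  csum (fun k => if Nat.eq_dec k m then v else RtoC 0) N = v.
Proof.
  induction N; intros H; cbn [csum].
  - replace m with O by lia. reflexivity.
  - destruct (Nat.eq_dec (S N) m) as [<-|Hm].
    + rewrite csum_eq_0; [ring|]. intros k Hk. destruct (Nat.eq_dec k (S N)); [lia | auto].
    + rewrite IHN by lia. ring.
Qed.

Lemma Cmod_le_Rabs_fst_snd (c : C) : Cmod c <= Rabs (fst c) + Rabs (snd c).
Proof.
  unfold Cmod. rewrite <- (sqrt_pow2 (Rabs (fst c) + Rabs (snd c)))
    by (generalize (Rabs_pos (fst c)) (Rabs_pos (snd c)); lra).
  apply sqrt_le_1_alt.
  rewrite <- (pow2_abs (fst c)), <- (pow2_abs (snd c)).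
  generalize (Rabs_pos (fst c)) (Rabs_pos (snd c)); intros; nra.
Qed.

Lemma Rabs_snd_le_Cmod (c : C) : Rabs (snd c) <= Cmod c.
Proof. eapply Rle_trans; [apply Rmax_r | apply Rmax_Cmod]. Qed.

(* [pser] sums the real and imaginary parts separately; this is the tail bound for such sums. *)
Lemma Cseries_tail_le (f : nat -> C) (B x : R) N : 0 <= x <= 1/2 ->
  (forall k, Cmod (f k) <= B * x ^ k) ->
  Cmod (Cminus (Series (fun k => fst (f k)), Series (fun k => snd (f k))) (csum f N))
    <= 4 * B * x ^ S N.
Proof.
  intros Hx Hf.
  assert (H1 := Series_tail_le (fun k => fst (f k)) B x N Hx
                  (fun k => Rle_trans _ _ _ (re_le_Cmod _) (Hf k))).
  assert (H2 := Series_tail_le (fun k => snd (f k)) B x N Hx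
                  (fun k => Rle_trans _ _ _ (Rabs_snd_le_Cmod _) (Hf k))).
  eapply Rle_trans; [apply Cmod_le_Rabs_fst_snd|]. simpl.
  rewrite csum_fst, csum_snd. simpl in H1, H2. unfold Rminus in *. lra.
Qed.

Definition pterm (a : nat -> C) (z : C) (k : nat) : C := Cmult (a k) (Cpow z k).

Lemma pser_tail_le a z sigma B N : 0 < sigma -> Cmod z <= sigma -> coef_bound a (2 * sigma) B ->
  Cmod (Cminus (pser a z) (csum (pterm a z) N)) <= 4 * B * (Cmod z / (2 * sigma)) ^ S N.
Proof.
  intros Hs Hz HB. apply Cseries_tail_le.
  - split; [apply Rdiv_le_0_compat; [apply Cmod_ge_0 | lra]|].
    apply Rmult_le_reg_r with (2 * sigma); [lra|].
    unfold Rdiv. rewrite Rmult_assoc, Rinv_l; lra.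
  - intros k. unfold pterm. rewrite Cmod_mult, Cmod_pow.
    replace (Cmod z ^ k) with ((2 * sigma) ^ k * (Cmod z / (2 * sigma)) ^ k)
      by (rewrite <- Rpow_mult_distr; f_equal; field; lra).
    rewrite <- Rmult_assoc. apply Rmult_le_compat_r; [|apply HB].
    apply pow_le, Rdiv_le_0_compat; [apply Cmod_ge_0 | lra].
Qed.

Lemma half_pow_pos N : 0 < (1/2) ^ N.
Proof. apply pow_lt; lra. Qed.

Lemma half_pow_le_1 N : (1/2) ^ N <= 1.
Proof. induction N; simpl; lra. Qed.

Lemma pow_S_le_half_pow x N : 0 <= x <= 1/2 -> x ^ S N <= (1/2) ^ N.
Proof.
  intros Hx. simpl. assert (x ^ N <= (1/2) ^ N) by (apply pow_incr; lra).
  assert (0 <= x ^ N) by (apply pow_le; lra). generalize (half_pow_le_1 N). nra.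
Qed.

Lemma half_pow_lt N0 eps : 0 < eps -> exists N, (N0 <= N)%nat /\ (1/2) ^ N < eps.
Proof.
  intros He. destruct (pow_lt_1_zero (1/2) ltac:(rewrite Rabs_pos_eq; lra) eps He) as [N HN].
  exists (max N N0). split; [lia|].
  specialize (HN (max N N0) ltac:(lia)). rewrite Rabs_pos_eq in HN; auto.
  apply Rlt_le, half_pow_pos.
Qed.

Lemma pow2_gt K : exists N, K < 2 ^ N.
Proof.
  destruct (half_pow_lt O (/ (Rabs K + 1))) as [N [_ HN]].
  { apply Rinv_0_lt_compat. generalize (Rabs_pos K). lra. }
  exists N. rewrite <- (Rinv_inv (2 ^ N)), <- pow_inv.
  replace (/ 2) with (1/2) by field.
  assert (K <= Rabs K) by apply RRle_abs.
  apply Rle_lt_trans with (Rabs K + 1); [lra|].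
  rewrite <- (Rinv_inv (Rabs K + 1)). apply Rinv_lt_contravar; auto.
  apply Rmult_lt_0_compat; [apply half_pow_pos|]. apply Rinv_0_lt_compat.
  generalize (Rabs_pos K); lra.
Qed.

Lemma le_of_le_plus_half_pow X Y c N0 :
  (forall N, (N0 <= N)%nat -> X <= Y + c * (1/2) ^ N) -> X <= Y.
Proof.
  intros H. destruct (Rle_dec X Y) as [|Hn]; auto.
  destruct (Rle_dec c 0) as [Hc|Hc].
  - specialize (H N0 (le_n _)). generalize (half_pow_pos N0). nra.
  - destruct (half_pow_lt N0 ((X - Y) / c)) as [N [HN Hs]].
    { apply Rdiv_lt_0_compat; lra. }
    specialize (H N HN).
    apply Rmult_lt_compat_l with (r := c) in Hs; [|lra].
    replace (c * ((X - Y) / c)) with (X - Y) in Hs by (field; lra). lra.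
Qed.

Lemma INR_le_pow2 k : INR k <= 2 ^ k.
Proof.
  induction k; [simpl; lra|]. rewrite S_INR. simpl pow.
  assert (1 <= 2 ^ k) by (apply pow_R1_Rle; lra). lra.
Qed.

Lemma Cpow_sub_le (z w : C) rho k : 1 <= rho -> Cmod z <= rho -> Cmod w <= rho ->
  Cmod (Cminus (Cpow z k) (Cpow w k)) <= INR k * rho ^ k * Cmod (Cminus z w).
Proof.
  intros H1 Hz Hw. induction k.
  - simpl. replace (Cminus 1 1) with (RtoC 0) by ring. rewrite Cmod_0. lra.
  - replace (Cminus (Cpow z (S k)) (Cpow w (S k))) with
      (Cplus (Cmult z (Cminus (Cpow z k) (Cpow w k))) (Cmult (Cpow w k) (Cminus z w)))
      by (simpl; ring).
    eapply Rle_trans; [apply Cmod_triangle|]. rewrite !Cmod_mult, Cmod_pow.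
    assert (Hd := Cmod_ge_0 (Cminus z w)).
    assert (Hwk : Cmod w ^ k <= rho ^ k) by (apply pow_incr; split; auto; apply Cmod_ge_0).
    assert (Hk := pos_INR k).
    assert (Hrk : 1 <= rho ^ k) by (apply pow_R1_Rle; lra).
    assert (Cmod z * Cmod (Cminus (Cpow z k) (Cpow w k))
            <= rho * (INR k * rho ^ k * Cmod (Cminus z w)))
      by (apply Rmult_le_compat; auto using Cmod_ge_0).
    assert (Cmod w ^ k * Cmod (Cminus z w) <= rho * rho ^ k * Cmod (Cminus z w))
      by (apply Rmult_le_compat_r; nra).
    rewrite S_INR. simpl pow. nra.
Qed.

Lemma csum_sub_le (f g : nat -> C) c N :
  (forall k, Cmod (Cminus (f k) (g k)) <= c * (1/2) ^ k) ->
  Cmod (Cminus (csum f N) (csum g N)) <= 2 * c * (1 - (1/2) ^ S N).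
Proof.
  intros H. induction N.
  - specialize (H O). simpl in *. lra.
  - cbn [csum]. replace (Cminus (Cplus (csum f N) (f (S N))) (Cplus (csum g N) (g (S N))))
      with (Cplus (Cminus (csum f N) (csum g N)) (Cminus (f (S N)) (g (S N)))) by ring.
    eapply Rle_trans; [apply Cmod_triangle|]. specialize (H (S N)).
    simpl pow in *. lra.
Qed.

Section Power_series.

Variable a : nat -> C.
Hypothesis Ha : coefs_bounded a.

Lemma pser_csum_approx rho : 0 <= rho -> exists c, 0 <= c /\
  forall z, Cmod z <= rho -> forall N,
    Cmod (Cminus (pser a z) (csum (pterm a z) N)) <= c * (1/2) ^ N.
Proof.
  intros Hr. destruct (Ha (2 * (rho + 1))) as [B HB]; [lra|].
  assert (HB0 := coef_bound_nonneg _ _ _ HB).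
  exists (4 * B). split; [lra|]. intros z Hz N.
  eapply Rle_trans; [apply (pser_tail_le a z (rho + 1) B N); auto; lra|].
  apply Rmult_le_compat_l; [lra|]. apply pow_S_le_half_pow.
  split; [apply Rdiv_le_0_compat; [apply Cmod_ge_0 | lra]|].
  apply Rmult_le_reg_r with (2 * (rho + 1)); [lra|].
  unfold Rdiv. rewrite Rmult_assoc, Rinv_l; lra.
Qed.

Lemma pser_eq_of_approx z V c N0 :
  (forall N, (N0 <= N)%nat -> Cmod (Cminus V (csum (pterm a z) N)) <= c * (1/2) ^ N) ->
  V = pser a z.
Proof.
  intros H. destruct (pser_csum_approx (Cmod z) (Cmod_ge_0 z)) as [c' [_ HA]].
  enough (Hm : Cminus V (pser a z) = RtoC 0).
  { replace V with (Cplus (Cminus V (pser a z)) (pser a z)) by ring. rewrite Hm. ring. }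
  apply Cmod_eq_0, Rle_antisym; [|apply Cmod_ge_0].
  apply (le_of_le_plus_half_pow _ 0 (c + c') N0). intros N HN.
  replace (Cminus V (pser a z)) with
    (Cplus (Cminus V (csum (pterm a z) N)) (Copp (Cminus (pser a z) (csum (pterm a z) N))))
    by ring.
  eapply Rle_trans; [apply Cmod_triangle|]. rewrite Cmod_opp.
  specialize (H N HN). specialize (HA z (Rle_refl _) N). lra.
Qed.

Lemma pser_bounded rho : 0 <= rho -> exists K, forall z,
  Cmod z <= rho -> Cmod (pser a z) <= K.
Proof.
  intros Hr. destruct (pser_csum_approx rho Hr) as [c [_ HA]].
  exists (Cmod (a O) + c). intros z Hz. specialize (HA z Hz O).
  replace (csum (pterm a z) 0) with (a O) in HA by (unfold pterm; simpl; ring).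
  rewrite pow_O, Rmult_1_r in HA.
  replace (pser a z) with (Cplus (Cminus (pser a z) (a O)) (a O)) by ring.
  eapply Rle_trans; [apply Cmod_triangle|]. lra.
Qed.

Lemma pser_lipschitz rho : 1 <= rho -> exists L, 0 <= L /\ forall z w,
  Cmod z <= rho -> Cmod w <= rho ->
  Cmod (Cminus (pser a z) (pser a w)) <= L * Cmod (Cminus z w).
Proof.
  intros Hr. destruct (Ha (4 * rho)) as [B HB]; [lra|].
  assert (HB0 := coef_bound_nonneg _ _ _ HB).
  destruct (pser_csum_approx rho ltac:(lra)) as [c [_ HA]].
  exists (2 * B). split; [lra|]. intros z w Hz Hw.
  apply (le_of_le_plus_half_pow _ _ (2 * c) O). intros N _.
  assert (Hd := Cmod_ge_0 (Cminus z w)).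
  assert (Hterm : forall k, Cmod (Cminus (pterm a z k) (pterm a w k))
                            <= B * Cmod (Cminus z w) * (1/2) ^ k).
  { intros k. unfold pterm.
    replace (Cminus (Cmult (a k) (Cpow z k)) (Cmult (a k) (Cpow w k)))
      with (Cmult (a k) (Cminus (Cpow z k) (Cpow w k))) by ring.
    rewrite Cmod_mult.
    (* [k <= 2^k] turns the factor [k] from [Cpow_sub_le] into a geometric decay. *)
    assert (H4 : INR k * rho ^ k <= (4 * rho) ^ k * (1/2) ^ k).
    { rewrite <- Rpow_mult_distr. replace (4 * rho * (1/2)) with (2 * rho) by field.
      rewrite Rpow_mult_distr. apply Rmult_le_compat_r; [apply pow_le; lra | apply INR_le_pow2]. }
    assert (Hak := Cmod_ge_0 (a k)). specialize (HB k).
    assert (H5 := half_pow_pos k). assert (0 <= (4 * rho) ^ k) by (apply pow_le; lra).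
    assert (Cmod (a k) * (INR k * rho ^ k) <= B * (1/2) ^ k).
    { apply Rle_trans with (Cmod (a k) * (4 * rho) ^ k * (1/2) ^ k); [|nra].
      rewrite Rmult_assoc. apply Rmult_le_compat_l; auto. }
    eapply Rle_trans; [apply Rmult_le_compat_l; [auto | apply (Cpow_sub_le z w rho k); auto]|].
    replace (Cmod (a k) * (INR k * rho ^ k * Cmod (Cminus z w)))
      with (Cmod (a k) * (INR k * rho ^ k) * Cmod (Cminus z w)) by ring.
    replace (B * Cmod (Cminus z w) * (1/2) ^ k) with (B * (1/2) ^ k * Cmod (Cminus z w)) by ring.
    apply Rmult_le_compat_r; auto. }
  assert (Hsum := csum_sub_le _ _ _ N Hterm).
  replace (Cminus (pser a z) (pser a w)) with
    (Cplus (Cplus (Cminus (pser a z) (csum (pterm a z) N))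
                  (Cminus (csum (pterm a z) N) (csum (pterm a w) N)))
           (Copp (Cminus (pser a w) (csum (pterm a w) N)))) by ring.
  eapply Rle_trans; [apply Cmod_triangle|]. rewrite Cmod_opp.
  eapply Rle_trans; [apply Rplus_le_compat_r, Cmod_triangle|].
  assert (Hz' := HA z Hz N). assert (Hw' := HA w Hw N).
  assert (0 <= (1/2) ^ S N) by (apply Rlt_le, half_pow_pos).
  assert (0 <= B * Cmod (Cminus z w)) by (apply Rmult_le_pos; auto).
  nra.
Qed.

End Power_series.

Definition circ (r t : R) : C := (r * cos t, r * sin t).

Lemma Cmod_circ r t : Cmod (circ r t) = Rabs r.
Proof.
  unfold Cmod, circ; simpl.
  replace ((r * cos t) * ((r * cos t) * 1) + (r * sin t) * ((r * sin t) * 1)) with (r ^ 2)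
    by (generalize (sin2_cos2 t); unfold Rsqr; simpl; nra).
  rewrite <- (pow2_abs r). apply sqrt_pow2, Rabs_pos.
Qed.

Lemma circ_scal r t : circ r t = Cmult (RtoC r) (circ 1 t).
Proof. unfold circ, Cmult, RtoC; simpl. f_equal; ring. Qed.

Lemma circ_sub r s t : Cminus (circ r t) (circ s t) = circ (r - s) t.
Proof. unfold circ, Cminus, Cplus, Copp; simpl. f_equal; ring. Qed.

Lemma circ_mult s t : Cmult (circ 1 s) (circ 1 t) = circ 1 (s + t).
Proof. unfold circ, Cmult; simpl. rewrite cos_plus, sin_plus. f_equal; ring. Qed.

Lemma circ_pow t k : Cpow (circ 1 t) k = circ 1 (INR k * t).
Proof.
  induction k.
  - unfold circ; simpl. rewrite Rmult_0_l, cos_0, sin_0. unfold RtoC. f_equal; ring.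
  - simpl Cpow. rewrite IHk, Cmult_comm, circ_mult, S_INR. f_equal. ring.
Qed.

Lemma polar (w : C) : exists phi, -PI <= phi <= PI /\ w = circ (Cmod w) phi.
Proof.
  assert (Hpi := PI_RGT_0).
  destruct (Req_dec (Cmod w) 0) as [H0|H0].
  { exists 0. split; [lra|]. apply Cmod_eq_0 in H0. subst. rewrite Cmod_0.
    unfold circ, RtoC. f_equal; ring. }
  assert (Hp : 0 < Cmod w) by (generalize (Cmod_ge_0 w); lra).
  destruct w as [x y].
  assert (Hm : Cmod (x, y) ^ 2 = x ^ 2 + y ^ 2) by (rewrite Cmod2_alt; reflexivity).
  set (m := Cmod (x, y)) in *. set (c := x / m).
  assert (Hc : -1 <= c <= 1).
  { assert (-m <= x <= m) by (split; nra).
    split; apply Rmult_le_reg_r with m; auto; unfold c, Rdiv;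
      rewrite Rmult_assoc, Rinv_l by lra; lra. }
  assert (Hs : sqrt (1 - c²) = Rabs y / m).
  { rewrite <- (sqrt_pow2 (Rabs y / m)) by (apply Rdiv_le_0_compat; [apply Rabs_pos | lra]).
    f_equal. unfold c, Rsqr.
    replace (1 - x / m * (x / m)) with ((m ^ 2 - x ^ 2) / m ^ 2) by (field; lra).
    replace (m ^ 2 - x ^ 2) with (Rabs y ^ 2) by (rewrite pow2_abs; lra). field. lra. }
  assert (Hacos := acos_bound c).
  destruct (Rle_dec 0 y) as [Hy|Hy].
  - exists (acos c). split; [lra|]. unfold circ.
    rewrite cos_acos, sin_acos, Hs, Rabs_pos_eq by auto. unfold c. f_equal; field; lra.
  - exists (- acos c). split; [lra|]. unfold circ.
    rewrite cos_neg, sin_neg, cos_acos, sin_acos, Hs, Rabs_left by (auto || lra).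
    unfold c. f_equal; field; lra.
Qed.

Lemma continuity_pt_of_local_bound (h k1 k2 : R -> R) x0 L d :
  0 <= L -> 0 < d -> continuity_pt k1 x0 -> continuity_pt k2 x0 ->
  (forall x, Rabs (x - x0) < d ->
     Rabs (h x - h x0) <= L * (Rabs (k1 x - k1 x0) + Rabs (k2 x - k2 x0))) ->
  continuity_pt h x0.
Proof.
  intros HL Hd H1 H2 H eps Heps.
  set (eps' := eps / (2 * (L + 1))).
  assert (He' : 0 < eps') by (unfold eps'; apply Rdiv_lt_0_compat; lra).
  destruct (H1 eps' He') as [d1 [Hd1 Hk1]]. destruct (H2 eps' He') as [d2 [Hd2 Hk2]].
  exists (Rmin d (Rmin d1 d2)). split; [repeat apply Rmin_pos; auto|].
  intros x [Hx Hdist]. simpl in *. unfold R_dist in *.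
  assert (Hm1 := Rmin_l d (Rmin d1 d2)). assert (Hm2 := Rmin_r d (Rmin d1 d2)).
  assert (Hm3 := Rmin_l d1 d2). assert (Hm4 := Rmin_r d1 d2).
  assert (A1 : Rabs (k1 x - k1 x0) < eps')
    by (apply (Hk1 x); split; [exact Hx | simpl; unfold R_dist; lra]).
  assert (A2 : Rabs (k2 x - k2 x0) < eps')
    by (apply (Hk2 x); split; [exact Hx | simpl; unfold R_dist; lra]).
  eapply Rle_lt_trans; [apply H; lra|].
  assert (L * (Rabs (k1 x - k1 x0) + Rabs (k2 x - k2 x0)) <= L * (2 * eps'))
    by (apply Rmult_le_compat_l; lra).
  assert (L * (2 * eps') < eps).
  { unfold eps'. replace (L * (2 * (eps / (2 * (L + 1))))) with (eps * (L / (L + 1)))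
      by (field; lra).
    assert (L / (L + 1) < 1).
    { apply Rmult_lt_reg_r with (L + 1); [lra|].
      unfold Rdiv. rewrite Rmult_assoc, Rinv_l; lra. }
    nra. }
  lra.
Qed.

Lemma Rabs_Cmod_sub_le (x y : C) : Rabs (Cmod x - Cmod y) <= Cmod (Cminus x y).
Proof.
  assert (T1 := Cmod_triangle (Cminus x y) y).
  assert (T2 := Cmod_triangle (Cminus y x) x).
  replace (Cplus (Cminus x y) y) with x in T1 by ring.
  replace (Cplus (Cminus y x) x) with y in T2 by ring.
  replace (Cminus y x) with (Copp (Cminus x y)) in T2 by ring.
  rewrite Cmod_opp in T2. apply Rabs_le. lra.
Qed.

Section Maximum_modulus.

Variable a : nat -> C.
Hypothesis Ha : coefs_bounded a.

Lemma maxmod_lub r :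
  (forall t, Cmod (pser a (circ r t)) <= maxmod a r) /\
  (forall K, (forall t, Cmod (pser a (circ r t)) <= K) -> maxmod a r <= K).
Proof.
  destruct (pser_bounded a Ha (Rabs r) (Rabs_pos r)) as [K0 HK0].
  assert (HK : forall t, Cmod (pser a (circ r t)) <= K0)
    by (intros t; apply HK0; rewrite Cmod_circ; lra).
  unfold maxmod.
  change (fun y => exists theta, y = Cmod (pser a (r * cos theta, r * sin theta)))
    with (fun y => exists theta, y = Cmod (pser a (circ r theta))).
  set (E := fun y => exists theta, y = Cmod (pser a (circ r theta))).
  destruct (Lub_Rbar_correct E) as [Hub Hlub].
  assert (Hle : Rbar_le (Lub_Rbar E) K0) by (apply Hlub; intros x [t ->]; apply HK).
  assert (Hge := Hub _ (ex_intro _ 0 eq_refl)).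
  destruct (Lub_Rbar E) as [l| |]; simpl in Hle, Hge; try contradiction.
  split.
  - intros t. apply (Hub _ (ex_intro _ t eq_refl)).
  - intros K HKK. apply (Hlub (Finite K)). intros x [t ->]. apply HKK.
Qed.

Lemma maxmod_ub r t : Cmod (pser a (circ r t)) <= maxmod a r.
Proof. apply maxmod_lub. Qed.

Lemma maxmod_least r K : (forall t, Cmod (pser a (circ r t)) <= K) -> maxmod a r <= K.
Proof. apply maxmod_lub. Qed.

Lemma maxmod_lipschitz rho : 1 <= rho -> exists L, 0 <= L /\ forall r s,
  0 <= r <= rho -> 0 <= s <= rho -> Rabs (maxmod a r - maxmod a s) <= L * Rabs (r - s).
Proof.
  intros Hr. destruct (pser_lipschitz a Ha rho Hr) as [L [HL0 HL]].
  exists L. split; auto.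
  assert (Hone : forall r s, 0 <= r <= rho -> 0 <= s <= rho ->
                   maxmod a r <= maxmod a s + L * Rabs (r - s)).
  { intros r s H1 H2. apply maxmod_least. intros t.
    assert (H := HL (circ r t) (circ s t)).
    rewrite !Cmod_circ, circ_sub, Cmod_circ, !(Rabs_pos_eq r), (Rabs_pos_eq s) in H by lra.
    specialize (H ltac:(lra) ltac:(lra)).
    assert (Hs := maxmod_ub s t).
    assert (Hd := Rabs_Cmod_sub_le (pser a (circ r t)) (pser a (circ s t))).
    apply Rabs_le_between in Hd. lra. }
  intros r s H1 H2. apply Rabs_le. split.
  - specialize (Hone s r H2 H1). rewrite Rabs_minus_sym in Hone. lra.
  - specialize (Hone r s H1 H2). lra.
Qed.

Lemma maxmod_continuous c : 0 < c -> continuity_pt (maxmod a) c.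
Proof.
  intros Hc. destruct (maxmod_lipschitz (2 * c + 1) ltac:(lra)) as [L [HL Hlip]].
  apply (continuity_pt_of_local_bound _ id (fun _ => 0) c L c); auto;
    [apply continuity_pt_id | apply continuity_pt_const; intros ? ?; auto|].
  intros x Hx. apply Rabs_def2 in Hx. unfold id. rewrite Rminus_diag, Rabs_R0, Rplus_0_r.
  apply Hlip; lra.
Qed.

Lemma maxmod_attained r : 0 < r -> exists t, Cmod (pser a (circ r t)) = maxmod a r.
Proof.
  intros Hr. destruct (pser_lipschitz a Ha (r + 1) ltac:(lra)) as [L [HL0 HL]].
  destruct (continuity_ab_maj (fun t => Cmod (pser a (circ r t))) (-PI) PI)
    as [t0 [Ht0 _]]; [generalize PI_RGT_0; lra| |].
  { intros t _. apply (continuity_pt_of_local_bound _ cos sin t (L * r) 1);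
      [apply Rmult_le_pos; lra | lra | apply continuity_cos | apply continuity_sin|].
    intros x _.
    assert (H := HL (circ r x) (circ r t)). rewrite !Cmod_circ, Rabs_pos_eq in H by lra.
    specialize (H ltac:(lra) ltac:(lra)).
    assert (Hc : Cmod (Cminus (circ r x) (circ r t))
                 <= r * (Rabs (cos x - cos t) + Rabs (sin x - sin t))).
    { eapply Rle_trans; [apply Cmod_le_Rabs_fst_snd|]. unfold circ; simpl.
      replace (r * cos x + - (r * cos t)) with (r * (cos x - cos t)) by ring.
      replace (r * sin x + - (r * sin t)) with (r * (sin x - sin t)) by ring.
      rewrite !Rabs_mult, Rabs_pos_eq by lra. lra. }
    eapply Rle_trans; [apply Rabs_Cmod_sub_le|]. eapply Rle_trans; [exact H|].
    rewrite Rmult_assoc. apply Rmult_le_compat_l; auto. }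
  exists t0. apply Rle_antisym; [apply maxmod_ub|].
  apply maxmod_least. intros t.
  destruct (polar (circ r t)) as [phi [Hphi Heq]].
  rewrite Cmod_circ, Rabs_pos_eq in Heq by lra. rewrite Heq. apply Ht0. auto.
Qed.

End Maximum_modulus.

Fixpoint csum_lt (g : nat -> C) (N : nat) : C :=
  match N with O => RtoC 0 | S n => Cplus (csum_lt g n) (g n) end.

Lemma csum_lt_ext f g N : (forall k, f k = g k) -> csum_lt f N = csum_lt g N.
Proof. intros H. induction N; simpl; rewrite ?IHN, ?H; auto. Qed.

Lemma csum_lt_scal c g N : csum_lt (fun l => Cmult c (g l)) N = Cmult c (csum_lt g N).
Proof. induction N; simpl; [ring|]. rewrite IHN. ring. Qed.

Lemma csum_lt_minus f g N :
  csum_lt (fun l => Cminus (f l) (g l)) N = Cminus (csum_lt f N) (csum_lt g N).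
Proof. induction N; simpl; [ring|]. rewrite IHN. ring. Qed.

Lemma csum_lt_csum (F : nat -> nat -> C) N M :
  csum_lt (fun l => csum (F l) M) N = csum (fun k => csum_lt (fun l => F l k) N) M.
Proof.
  induction N; simpl.
  - symmetry. apply csum_eq_0. auto.
  - rewrite IHN, <- csum_plus. auto.
Qed.

Lemma Cmod_csum_lt_le g b N : (forall l, Cmod (g l) <= b) -> Cmod (csum_lt g N) <= INR N * b.
Proof.
  intros H. assert (Hb : 0 <= b) by (eapply Rle_trans; [apply Cmod_ge_0 | apply (H O)]).
  induction N.
  - simpl. rewrite Cmod_0. lra.
  - cbn [csum_lt]. eapply Rle_trans; [apply Cmod_triangle|]. specialize (H N).
    rewrite S_INR. lra.
Qed.

Lemma csum_lt_geom w N : Cmult (Cminus w 1) (csum_lt (Cpow w) N) = Cminus (Cpow w N) 1.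
Proof. induction N; simpl; [ring|]. rewrite Cmult_plus_distr_l, IHN. ring. Qed.

Lemma csum_lt_1 N : csum_lt (fun _ => RtoC 1) N = RtoC (INR N).
Proof.
  induction N; [reflexivity|]. cbn [csum_lt]. rewrite IHN, S_INR.
  unfold RtoC, Cplus; simpl. f_equal; ring.
Qed.

Definition unity_root (N : nat) : C := circ 1 (2 * PI / INR N).

Lemma unity_root_pow_N N : (0 < N)%nat -> Cpow (unity_root N) N = RtoC 1.
Proof.
  intros H. unfold unity_root. rewrite circ_pow.
  replace (INR N * (2 * PI / INR N)) with (2 * PI) by (field; apply not_0_INR; lia).
  unfold circ. rewrite cos_2PI, sin_2PI. unfold RtoC. f_equal; ring.
Qed.

Lemma Cmod_unity_root_pow N j : Cmod (Cpow (unity_root N) j) = 1.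
Proof. rewrite Cmod_pow. unfold unity_root. rewrite Cmod_circ, Rabs_R1. apply pow1. Qed.

Lemma unity_root_pow_neq_1 N j : (0 < j < N)%nat -> Cpow (unity_root N) j <> RtoC 1.
Proof.
  intros H Heq. unfold unity_root in Heq. rewrite circ_pow in Heq.
  unfold circ, RtoC in Heq. injection Heq as Hc Hs. rewrite Rmult_1_l in Hc, Hs.
  set (x := INR j * (2 * PI / INR N)) in *.
  assert (HN : 0 < INR N) by (apply lt_0_INR; lia).
  assert (Hj : 0 < INR j) by (apply lt_0_INR; lia).
  assert (HjN : INR j < INR N) by (apply lt_INR; lia).
  assert (Hpi := PI_RGT_0).
  assert (Hx0 : 0 < x) by (unfold x; apply Rmult_lt_0_compat; auto; apply Rdiv_lt_0_compat; lra).
  assert (Hx1 : x < 2 * PI).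
  { unfold x. replace (INR j * (2 * PI / INR N)) with (2 * PI * (INR j / INR N)) by (field; lra).
    assert (INR j / INR N < 1)
      by (apply Rmult_lt_reg_r with (INR N); auto; unfold Rdiv; rewrite Rmult_assoc, Rinv_l; lra).
    nra. }
  destruct (sin_eq_O_2PI_0 x) as [H0|[H0|H0]]; try lra.
  rewrite H0, cos_PI in Hc. lra.
Qed.

Definition root_avg (N j : nat) : C :=
  Cmult (Cinv (INR N)) (csum_lt (Cpow (Cpow (unity_root N) j)) N).

Lemma Cmod_Cinv_INR N : (0 < N)%nat -> Cmod (Cinv (RtoC (INR N))) = / INR N.
Proof.
  intros H. assert (0 < INR N) by (apply lt_0_INR; auto).
  rewrite Cmod_inv, Cmod_R, Rabs_pos_eq; [auto | lra|].
  intros Heq. apply RtoC_inj in Heq. lra.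
Qed.

Lemma Cmod_root_avg_le_1 N j : (0 < N)%nat -> Cmod (root_avg N j) <= 1.
Proof.
  intros H. assert (0 < INR N) by (apply lt_0_INR; auto).
  unfold root_avg. rewrite Cmod_mult, Cmod_Cinv_INR by auto.
  assert (Cmod (csum_lt (Cpow (Cpow (unity_root N) j)) N) <= INR N * 1).
  { apply Cmod_csum_lt_le. intros l. rewrite <- Cpow_mult_r, Cmod_unity_root_pow. lra. }
  apply Rmult_le_reg_l with (INR N); auto. rewrite <- Rmult_assoc, Rinv_r; lra.
Qed.

Lemma root_avg_shift N m k : (m < N)%nat -> (k < N)%nat ->
  root_avg N (N - m + k) = if Nat.eq_dec k m then RtoC 1 else RtoC 0.
Proof.
  intros Hm Hk. assert (HN : 0 < INR N) by (apply lt_0_INR; lia).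
  assert (HNC : RtoC (INR N) <> RtoC 0) by (intros E; apply RtoC_inj in E; lra).
  unfold root_avg. destruct (Nat.eq_dec k m) as [->|Hkm].
  - replace (N - m + m)%nat with N by lia.
    rewrite (csum_lt_ext _ (fun _ => RtoC 1)), csum_lt_1
      by (intros l; rewrite unity_root_pow_N, Cpow_1_l by lia; auto).
    field. auto.
  - set (w := Cpow (unity_root N) (N - m + k)).
    assert (Hw : w <> RtoC 1).
    { unfold w. destruct (lt_dec k m).
      - apply unity_root_pow_neq_1. lia.
      - replace (N - m + k)%nat with (N + (k - m))%nat by lia.
        rewrite Cpow_add_r, unity_root_pow_N, Cmult_1_l by lia. apply unity_root_pow_neq_1. lia. }
    assert (HwN : Cpow w N = RtoC 1).
    { unfold w. rewrite <- Cpow_mult_r, Nat.mul_comm, Cpow_mult_r, unity_root_pow_N by lia.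
      apply Cpow_1_l. }
    assert (Hw1 : Cminus w 1 <> RtoC 0).
    { intros E. apply Hw. replace w with (Cplus (Cminus w 1) 1) by ring. rewrite E. ring. }
    assert (Hgeom := csum_lt_geom w N). rewrite HwN in Hgeom.
    replace (csum_lt (Cpow w) N) with (RtoC 0).
    + ring.
    + replace (csum_lt (Cpow w) N)
        with (Cmult (Cinv (Cminus w 1)) (Cmult (Cminus w 1) (csum_lt (Cpow w) N)))
        by (field; auto).
      rewrite Hgeom. ring.
Qed.

Lemma quarter_pow_le k N : (N <= k)%nat -> (1/4) ^ k <= (1/2) ^ N * (1/2) ^ k.
Proof.
  intros H. replace (1/4) with ((1/2) * (1/2)) by field. rewrite Rpow_mult_distr.
  apply Rmult_le_compat_r; [apply Rlt_le, half_pow_pos|].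
  replace k with (N + (k - N))%nat by lia. rewrite pow_add.
  generalize (half_pow_pos N) (half_pow_le_1 (k - N)). nra.
Qed.

(* Averaging the partial sums of [f] over the N-th roots of unity, twisted by [w^(-m l)],
   isolates the coefficient [a_m R^m] up to the aliased terms [k >= N]. *)
Lemma root_avg_partial_sum_approx a rho B m N M :
  coef_bound a (4 * rho) B -> 0 <= rho -> (m < N)%nat -> (m <= M)%nat ->
  Cmod (Cminus (csum (fun k => Cmult (pterm a (RtoC rho) k) (root_avg N (N - m + k))) M)
               (pterm a (RtoC rho) m))
  <= 2 * B * (1/2) ^ N.
Proof.
  intros HB Hr Hm HM. assert (HB0 := coef_bound_nonneg _ _ _ HB).
  assert (HBN : 0 <= B * (1/2) ^ N) by (apply Rmult_le_pos; auto; apply Rlt_le, half_pow_pos).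
  rewrite <- (csum_single (pterm a (RtoC rho) m) m M HM).
  eapply Rle_trans; [apply (csum_sub_le _ _ (B * (1/2) ^ N))|].
  2: { assert (0 <= (1/2) ^ S M) by (apply Rlt_le, half_pow_pos). nra. }
  intros k. destruct (lt_dec k N) as [HkN|HkN].
  - rewrite root_avg_shift by auto.
    replace (Cminus (Cmult (pterm a rho k) (if Nat.eq_dec k m then RtoC 1 else RtoC 0))
                    (if Nat.eq_dec k m then pterm a rho m else RtoC 0)) with (RtoC 0)
      by (destruct (Nat.eq_dec k m) as [->|]; ring).
    rewrite Cmod_0. apply Rmult_le_pos; auto. apply Rlt_le, half_pow_pos.
  - destruct (Nat.eq_dec k m) as [->|]; [lia|].
    replace (Cminus (Cmult (pterm a rho k) (root_avg N (N - m + k))) 0)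
      with (Cmult (pterm a rho k) (root_avg N (N - m + k))) by ring.
    unfold pterm. rewrite !Cmod_mult, Cmod_RtoC_pow by auto.
    assert (Havg := Cmod_root_avg_le_1 N (N - m + k) ltac:(lia)).
    assert (Hak : Cmod (a k) * rho ^ k <= B * (1/4) ^ k).
    { specialize (HB k). replace (rho ^ k) with ((4 * rho) ^ k * (1/4) ^ k)
        by (rewrite <- Rpow_mult_distr; f_equal; field).
      rewrite <- Rmult_assoc. apply Rmult_le_compat_r; auto. apply pow_le; lra. }
    assert (Hq := quarter_pow_le k N ltac:(lia)).
    assert (0 <= Cmod (a k) * rho ^ k) by (apply Rmult_le_pos; [apply Cmod_ge_0 | apply pow_le; lra]).
    assert (0 <= Cmod (root_avg N (N - m + k))) by apply Cmod_ge_0.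
    nra.
Qed.

(* [w^(-m l) = w^((N - m) l)] twists the average over the N-th roots of unity [w^l]. *)
Definition root_twist_avg (N m : nat) (F : nat -> C) : C :=
  Cmult (Cinv (INR N)) (csum_lt (fun l => Cmult (Cpow (Cpow (unity_root N) (N - m)) l) (F l)) N).

Lemma Cmod_root_twist_avg_le N m F b : (0 < N)%nat ->
  (forall l, Cmod (F l) <= b) -> Cmod (root_twist_avg N m F) <= b.
Proof.
  intros HN Hb. assert (0 < INR N) by (apply lt_0_INR; auto).
  unfold root_twist_avg. rewrite Cmod_mult, Cmod_Cinv_INR by auto.
  assert (Cmod (csum_lt (fun l => Cmult (Cpow (Cpow (unity_root N) (N - m)) l) (F l)) N)
          <= INR N * b).
  { apply Cmod_csum_lt_le. intros l.
    rewrite Cmod_mult, <- Cpow_mult_r, Cmod_unity_root_pow, Rmult_1_l. auto. }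
  apply Rmult_le_reg_l with (INR N); auto. rewrite <- Rmult_assoc, Rinv_r; lra.
Qed.

Lemma root_twist_avg_minus N m F G :
  root_twist_avg N m (fun l => Cminus (F l) (G l))
  = Cminus (root_twist_avg N m F) (root_twist_avg N m G).
Proof.
  unfold root_twist_avg.
  rewrite (csum_lt_ext _ (fun l => Cminus (Cmult (Cpow (Cpow (unity_root N) (N - m)) l) (F l))
                                         (Cmult (Cpow (Cpow (unity_root N) (N - m)) l) (G l))))
    by (intros; ring).
  rewrite csum_lt_minus. ring.
Qed.

Lemma root_twist_avg_partial_sum a rho N m M :
  root_twist_avg N m (fun l => csum (pterm a (Cmult (RtoC rho) (Cpow (unity_root N) l))) M)
  = csum (fun k => Cmult (pterm a (RtoC rho) k) (root_avg N (N - m + k))) M.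
Proof.
  unfold root_twist_avg. rewrite (csum_lt_ext _ (fun l => csum (fun k =>
      Cmult (Cpow (Cpow (unity_root N) (N - m)) l)
            (pterm a (Cmult (RtoC rho) (Cpow (unity_root N) l)) k)) M))
    by (intros l; rewrite csum_scal; auto).
  rewrite csum_lt_csum, <- csum_scal. apply csum_ext. intros k. unfold root_avg.
  rewrite (csum_lt_ext _ (fun l => Cmult (pterm a (RtoC rho) k)
                                    (Cpow (Cpow (unity_root N) (N - m + k)) l))).
  - rewrite csum_lt_scal. ring.
  - intros l. unfold pterm.
    rewrite Cpow_mult_l, Cpow_add_r, Cpow_mult_l, <- !Cpow_mult_r, (Nat.mul_comm l k). ring.
Qed.

Lemma cauchy_estimate a rho Bc m : coefs_bounded a -> 0 < rho ->
  (forall t, Cmod (pser a (circ rho t)) <= Bc) -> Cmod (a m) * rho ^ m <= Bc.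
Proof.
  intros Ha Hr HBc.
  destruct (pser_csum_approx a Ha rho ltac:(lra)) as [c [Hc HA]].
  destruct (Ha (4 * rho)) as [B HB]; [lra|].
  apply (le_of_le_plus_half_pow _ Bc (2 * B) (S m)). intros N HN.
  apply (le_of_le_plus_half_pow _ (Bc + 2 * B * (1/2) ^ N) c m). intros M HM.
  set (z := fun l => Cmult (RtoC rho) (Cpow (unity_root N) l)).
  set (avg := root_twist_avg N m (fun l => pser a (z l))).
  set (avgM := root_twist_avg N m (fun l => csum (pterm a (z l)) M)).
  assert (H1 : Cmod avg <= Bc).
  { apply Cmod_root_twist_avg_le; [lia|]. intros l.
    unfold z, unity_root. rewrite circ_pow, <- circ_scal. apply HBc. }
  assert (H2 : Cmod (Cminus avg avgM) <= c * (1/2) ^ M).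
  { unfold avg, avgM. rewrite <- root_twist_avg_minus.
    apply Cmod_root_twist_avg_le; [lia|]. intros l. apply HA.
    unfold z. rewrite Cmod_mult, Cmod_unity_root_pow, Cmod_R, Rabs_pos_eq; lra. }
  assert (H3 : Cmod (Cminus avgM (pterm a (RtoC rho) m)) <= 2 * B * (1/2) ^ N).
  { unfold avgM, z. rewrite root_twist_avg_partial_sum.
    apply root_avg_partial_sum_approx; auto; lra || lia. }
  replace (Cmod (a m) * rho ^ m) with (Cmod (pterm a (RtoC rho) m))
    by (unfold pterm; rewrite Cmod_mult, Cmod_RtoC_pow; lra).
  replace (pterm a (RtoC rho) m) with
    (Cplus (Cplus avg (Copp (Cminus avg avgM))) (Copp (Cminus avgM (pterm a (RtoC rho) m))))
    by ring.
  eapply Rle_trans; [apply Cmod_triangle|]. rewrite Cmod_opp.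
  eapply Rle_trans; [apply Rplus_le_compat_r, Cmod_triangle|]. rewrite Cmod_opp.
  lra.
Qed.

Definition growth_ratio (a : nat -> C) (n : nat) (r : R) : R := maxmod a r / r ^ n.

Section Growth_ratio.

Variable a : nat -> C.
Hypothesis Ha : coefs_bounded a.

Lemma maxmod_ge_coef r k : 0 < r -> Cmod (a k) * r ^ k <= maxmod a r.
Proof. intros Hr. apply cauchy_estimate; auto. intros t. apply maxmod_ub; auto. Qed.

Lemma maxmod_pos r k : 0 < r -> a k <> RtoC 0 -> 0 < maxmod a r.
Proof.
  intros Hr Hk. eapply Rlt_le_trans; [|apply (maxmod_ge_coef r k Hr)].
  apply Rmult_lt_0_compat; [apply Cmod_gt_0; auto | apply pow_lt; auto].
Qed.

Lemma growth_ratio_continuous n r : 0 < r -> continuity_pt (growth_ratio a n) r.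
Proof.
  intros Hr. apply (continuity_pt_div (maxmod a) (fun r => r ^ n));
    [apply maxmod_continuous; auto | apply derivable_continuous_pt, derivable_pt_pow |].
  apply pow_nonzero. lra.
Qed.

Lemma growth_ratio_ge_low_coef n k r : (k <= n)%nat -> 0 < r ->
  Cmod (a k) / r ^ (n - k) <= growth_ratio a n r.
Proof.
  intros Hk Hr. unfold growth_ratio.
  replace (r ^ n) with (r ^ k * r ^ (n - k)) by (rewrite <- pow_add; f_equal; lia).
  assert (0 < r ^ k) by (apply pow_lt; auto). assert (0 < r ^ (n - k)) by (apply pow_lt; auto).
  replace (Cmod (a k) / r ^ (n - k)) with (Cmod (a k) * r ^ k / (r ^ k * r ^ (n - k)))
    by (field; lra).
  apply Rmult_le_compat_r; [apply Rlt_le, Rinv_0_lt_compat; nra | apply maxmod_ge_coef; auto].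
Qed.

Lemma growth_ratio_ge_high_coef n k r : (n <= k)%nat -> 0 < r ->
  Cmod (a k) * r ^ (k - n) <= growth_ratio a n r.
Proof.
  intros Hk Hr. unfold growth_ratio. assert (0 < r ^ n) by (apply pow_lt; auto).
  replace (Cmod (a k) * r ^ (k - n)) with (Cmod (a k) * r ^ k / r ^ n)
    by (replace (r ^ k) with (r ^ n * r ^ (k - n)) by (rewrite <- pow_add; f_equal; lia);
        field; lra).
  apply Rmult_le_compat_r; [apply Rlt_le, Rinv_0_lt_compat; auto | apply maxmod_ge_coef; auto].
Qed.

Lemma growth_ratio_large_near_0 n k K : (k < n)%nat -> a k <> RtoC 0 ->
  exists eps, 0 < eps <= 1 /\ forall s, 0 < s < eps -> K < growth_ratio a n s.
Proof.
  intros Hk Hak. assert (Hc : 0 < Cmod (a k)) by (apply Cmod_gt_0; auto).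
  assert (HK : 0 < Rabs K + 1) by (generalize (Rabs_pos K); lra).
  exists (Rmin 1 (Cmod (a k) / (Rabs K + 1))).
  split; [split; [apply Rmin_pos; [lra | apply Rdiv_lt_0_compat; lra] | apply Rmin_l]|].
  intros s [Hs0 Hs]. assert (Hs1 := Rlt_le_trans _ _ _ Hs (Rmin_l _ _)).
  assert (Hs2 := Rlt_le_trans _ _ _ Hs (Rmin_r _ _)).
  eapply Rlt_le_trans; [|apply (growth_ratio_ge_low_coef n k s); lia || lra].
  assert (Hpow : s ^ (n - k) <= s).
  { destruct (n - k)%nat as [|d] eqn:Hd; [lia|]. simpl.
    assert (s ^ d <= 1) by (rewrite <- (pow1 d); apply pow_incr; lra). nra. }
  assert (0 < s ^ (n - k)) by (apply pow_lt; auto).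
  apply Rlt_le_trans with (Cmod (a k) / s).
  - apply Rle_lt_trans with (Rabs K); [apply RRle_abs|].
    apply Rmult_lt_reg_r with s; auto. unfold Rdiv. rewrite Rmult_assoc, Rinv_l, Rmult_1_r by lra.
    apply Rmult_lt_compat_r with (r := Rabs K + 1) in Hs2; [|lra].
    unfold Rdiv in Hs2. rewrite Rmult_assoc, Rinv_l, Rmult_1_r in Hs2 by lra.
    lra.
  - unfold Rdiv. apply Rmult_le_compat_l; [lra|]. apply Rinv_le_contravar; auto.
Qed.

Lemma growth_ratio_large_near_infty n k K : (n < k)%nat -> a k <> RtoC 0 ->
  exists R, 1 <= R /\ forall s, R < s -> K < growth_ratio a n s.
Proof.
  intros Hk Hak. assert (Hc : 0 < Cmod (a k)) by (apply Cmod_gt_0; auto).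
  exists (Rmax 1 ((Rabs K + 1) / Cmod (a k))). split; [apply Rmax_l|].
  intros s Hs. assert (Hs1 := Rle_lt_trans _ _ _ (Rmax_l _ _) Hs).
  assert (Hs2 := Rle_lt_trans _ _ _ (Rmax_r _ _) Hs).
  eapply Rlt_le_trans; [|apply (growth_ratio_ge_high_coef n k s); lia || lra].
  assert (Hpow : s <= s ^ (k - n)).
  { destruct (k - n)%nat as [|d] eqn:Hd; [lia|]. simpl.
    assert (1 <= s ^ d) by (apply pow_R1_Rle; lra). nra. }
  apply Rmult_lt_compat_r with (r := Cmod (a k)) in Hs2; auto.
  unfold Rdiv in Hs2. rewrite Rmult_assoc, Rinv_l, Rmult_1_r in Hs2 by lra.
  generalize (RRle_abs K). nra.
Qed.

End Growth_ratio.

Lemma rdiamond_exists a n0 n : coefs_bounded a -> transcendental_coeffs a ->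
  a n0 <> RtoC 0 -> (n0 < n)%nat -> exists r, is_rdiamond a n r.
Proof.
  intros Ha Ht Hn0 Hn.
  destruct (growth_ratio_large_near_0 a Ha n n0 (growth_ratio a n 1) Hn Hn0) as [eps [Heps Hsmall]].
  destruct (Ht (S n)) as [k [Hk Hak]].
  destruct (growth_ratio_large_near_infty a Ha n k (growth_ratio a n 1) ltac:(lia) Hak) as [R [HR Hbig]].
  destruct (continuity_ab_min (growth_ratio a n) eps R) as [r [Hmin Hr]]; [lra| |].
  { intros c Hc. apply growth_ratio_continuous; auto; lra. }
  exists r. split; [lra|]. intros s Hs. change (growth_ratio a n r <= growth_ratio a n s).
  assert (Hr1 := Hmin 1 ltac:(lra)).
  destruct (Rlt_dec s eps); [specialize (Hsmall s ltac:(lra)); lra|].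
  destruct (Rlt_dec R s); [specialize (Hbig s ltac:(lra)); lra|].
  apply Hmin. lra.
Qed.

Lemma rdiamond_le_succ a k n x y : coefs_bounded a -> a k <> RtoC 0 ->
  is_rdiamond a n x -> is_rdiamond a (S n) y -> x <= y.
Proof.
  intros Ha Hk [Hx Hxm] [Hy Hym].
  assert (Mx := maxmod_pos a Ha x k Hx Hk). assert (My := maxmod_pos a Ha y k Hy Hk).
  assert (Hxn := pow_lt x n Hx). assert (Hyn := pow_lt y n Hy).
  specialize (Hxm y Hy). specialize (Hym x Hx). simpl pow in Hym.
  apply Rmult_le_compat_r with (r := x ^ n * y ^ n) in Hxm; [|nra].
  apply Rmult_le_compat_r with (r := x * x ^ n * (y * y ^ n)) in Hym; [|apply Rlt_le; repeat apply Rmult_lt_0_compat; auto].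
  replace (maxmod a x / x ^ n * (x ^ n * y ^ n)) with (maxmod a x * y ^ n) in Hxm by (field; repeat split; lra).
  replace (maxmod a y / y ^ n * (x ^ n * y ^ n)) with (maxmod a y * x ^ n) in Hxm by (field; repeat split; lra).
  replace (maxmod a y / (y * y ^ n) * (x * x ^ n * (y * y ^ n)))
    with (maxmod a y * x ^ n * x) in Hym by (field; repeat split; lra).
  replace (maxmod a x / (x * x ^ n) * (x * x ^ n * (y * y ^ n)))
    with (maxmod a x * y ^ n * y) in Hym by (field; repeat split; lra).
  apply Rmult_le_reg_l with (maxmod a y * x ^ n); [nra|].
  apply Rmult_le_compat_r with (r := y) in Hxm; lra.
Qed.

Lemma rdiamond_coef_bound a n0 n r s : coefs_bounded a -> (n0 <= n)%nat ->
  is_rdiamond a n r -> r <= s -> Cmod (a n0) * 2 ^ n * s ^ n0 <= maxmod a (2 * s).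
Proof.
  intros Ha Hn [Hr Hmin] Hrs.
  assert (Hlow := growth_ratio_ge_low_coef a Ha n n0 r Hn Hr).
  specialize (Hmin (2 * s) ltac:(lra)). fold (growth_ratio a n r) (growth_ratio a n (2 * s)) in Hmin.
  unfold growth_ratio in Hmin at 2.
  set (d := (n - n0)%nat) in *.
  assert (Hsplit : forall x, x ^ n = x ^ n0 * x ^ d) by (intros; rewrite <- pow_add; f_equal; lia).
  assert (Hrd : 0 < r ^ d) by (apply pow_lt; lra).
  assert (Hsd : r ^ d <= s ^ d) by (apply pow_incr; lra).
  assert (Hsd0 : 0 < s ^ d) by lra.
  assert (Hs0 : 0 < s ^ n0) by (apply pow_lt; lra).
  assert (H2n : 0 < 2 ^ n) by (apply pow_lt; lra).
  assert (Hc := Cmod_ge_0 (a n0)).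
  assert (Hchain : Cmod (a n0) / s ^ d <= maxmod a (2 * s) / (2 ^ n * (s ^ n0 * s ^ d))).
  { rewrite <- Hsplit, <- Rpow_mult_distr.
    apply Rle_trans with (Cmod (a n0) / r ^ d); [|lra].
    unfold Rdiv. apply Rmult_le_compat_l; auto. apply Rinv_le_contravar; auto. }
  apply Rmult_le_compat_r with (r := 2 ^ n * (s ^ n0 * s ^ d)) in Hchain;
    [|apply Rlt_le; repeat apply Rmult_lt_0_compat; auto].
  replace (maxmod a (2 * s) / (2 ^ n * (s ^ n0 * s ^ d)) * (2 ^ n * (s ^ n0 * s ^ d)))
    with (maxmod a (2 * s)) in Hchain by (field; repeat split; lra).
  replace (Cmod (a n0) / s ^ d * (2 ^ n * (s ^ n0 * s ^ d)))
    with (Cmod (a n0) * 2 ^ n * s ^ n0) in Hchain by (field; repeat split; lra).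
  exact Hchain.
Qed.

Lemma rdiamond_unbounded a n0 rd : coefs_bounded a -> a n0 <> RtoC 0 ->
  (forall n, (n0 < n)%nat -> is_rdiamond a n (rd n)) ->
  forall M, exists n, (n0 < n)%nat /\ M < rd n.
Proof.
  intros Ha Hn0 Hrd M. apply NNPP. intros Hno.
  set (s := Rmax M 1). assert (Hs : 1 <= s) by apply Rmax_r.
  assert (Hc : 0 < Cmod (a n0)) by (apply Cmod_gt_0; auto).
  destruct (pow2_gt (maxmod a (2 * s) / Cmod (a n0))) as [N HN].
  set (n := max N (S n0)).
  assert (Hrn : rd n <= s).
  { destruct (Rle_dec (rd n) M) as [HM|HM]; [eapply Rle_trans; [exact HM | apply Rmax_l]|].
    exfalso. apply Hno. exists n. split; [unfold n; lia | lra]. }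
  assert (Hb := rdiamond_coef_bound a n0 n (rd n) s Ha ltac:(unfold n; lia)
                  (Hrd n ltac:(unfold n; lia)) Hrn).
  assert (H2 : 2 ^ N <= 2 ^ n) by (apply Rle_pow; [lra | unfold n; lia]).
  assert (Hs0 : 1 <= s ^ n0) by (apply pow_R1_Rle; lra).
  assert (H2n : 0 < 2 ^ n) by (apply pow_lt; lra).
  apply Rmult_lt_compat_r with (r := Cmod (a n0)) in HN; auto.
  replace (maxmod a (2 * s) / Cmod (a n0) * Cmod (a n0)) with (maxmod a (2 * s)) in HN
    by (field; repeat split; lra).
  assert (Hpos : 0 <= Cmod (a n0) * 2 ^ n) by (apply Rmult_le_pos; lra).
  assert (H := Rmult_le_compat_l _ _ _ Hpos Hs0). rewrite Rmult_1_r in H.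
  assert (Cmod (a n0) * 2 ^ N <= Cmod (a n0) * 2 ^ n) by (apply Rmult_le_compat_l; lra).
  lra.
Qed.

Lemma is_lim_seq_p_infty_of_incr (u : nat -> R) n0 :
  (forall n, (n0 < n)%nat -> u n <= u (S n)) ->
  (forall M, exists n, (n0 < n)%nat /\ M < u n) -> is_lim_seq u p_infty.
Proof.
  intros Hincr Hunb. apply is_lim_seq_spec. intros M.
  destruct (Hunb M) as [N [HN HM]]. exists N. intros k Hk.
  induction Hk as [|k Hk IH]; auto.
  specialize (Hincr k ltac:(lia)). lra.
Qed.

Definition sub_monomial (a : nat -> C) (g : C) (n k : nat) : C :=
  Cminus (a k) (if Nat.eq_dec k n then g else RtoC 0).

Lemma sub_monomial_bounded a g n : coefs_bounded a -> coefs_bounded (sub_monomial a g n).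
Proof.
  intros Ha rho Hr. destruct (Ha rho Hr) as [B HB].
  exists (B + Cmod g * rho ^ n). intros k. unfold sub_monomial.
  assert (0 <= Cmod g * rho ^ n) by (apply Rmult_le_pos; [apply Cmod_ge_0 | apply pow_le; auto]).
  assert (0 <= rho ^ k) by (apply pow_le; auto).
  specialize (HB k).
  assert (T := Cmod_triangle (a k) (Copp (if Nat.eq_dec k n then g else RtoC 0))).
  rewrite Cmod_opp in T. unfold Cminus.
  destruct (Nat.eq_dec k n) as [->|]; [nra|]. rewrite Cmod_0 in T. nra.
Qed.

Lemma pser_sub_monomial a g n z : coefs_bounded a ->
  pser (sub_monomial a g n) z = Cminus (pser a z) (Cmult g (Cpow z n)).
Proof.
  intros Ha. symmetry. destruct (pser_csum_approx a Ha (Cmod z) (Cmod_ge_0 z)) as [c [_ HA]].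
  apply (pser_eq_of_approx _ (sub_monomial_bounded a g n Ha) z _ c n). intros N HN.
  assert (E : csum (pterm (sub_monomial a g n) z) N
              = Cminus (csum (pterm a z) N) (Cmult g (Cpow z n))).
  { rewrite <- (csum_single (Cmult g (Cpow z n)) n N HN), <- csum_minus.
    apply csum_ext. intros k. unfold pterm, sub_monomial.
    destruct (Nat.eq_dec k n) as [->|]; ring. }
  rewrite E.
  replace (Cminus (Cminus (pser a z) (Cmult g (Cpow z n)))
                  (Cminus (csum (pterm a z) N) (Cmult g (Cpow z n))))
    with (Cminus (pser a z) (csum (pterm a z) N)) by ring.
  apply HA. lra.
Qed.

(* Synthetic division by [z - z0]: the quotient coefficients when [sum_k q_k z0^k = 0]. *)
Definition div_root (q : nat -> C) (z0 : C) (k : nat) : C :=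
  Cdiv (Copp (csum (pterm q z0) k)) (Cpow z0 (S k)).

Section Division_by_root.

Variables (q : nat -> C) (z0 : C).
Hypothesis Hz0 : z0 <> RtoC 0.

Lemma div_root_0 : q O = Copp (Cmult z0 (div_root q z0 O)).
Proof. unfold div_root, pterm. simpl. field. auto. Qed.

Lemma div_root_S k : q (S k) = Cminus (div_root q z0 k) (Cmult z0 (div_root q z0 (S k))).
Proof.
  unfold div_root. cbn [csum]. unfold pterm.
  assert (Cpow z0 k <> RtoC 0) by (apply Cpow_nz; auto).
  simpl Cpow. field. split; auto.
Qed.

Lemma csum_div_root z N :
  csum (pterm q z) N = Cminus (Cmult (Cminus z z0) (csum (pterm (div_root q z0) z) N))
                              (Cmult (div_root q z0 N) (Cpow z (S N))).
Proof.
  induction N.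
  - simpl. unfold pterm. rewrite div_root_0. simpl. ring.
  - cbn [csum]. rewrite IHN. unfold pterm. rewrite div_root_S. simpl Cpow. ring.
Qed.

Lemma div_root_low_coefs m : (forall j, (j < m)%nat -> q j = RtoC 0) ->
  (forall j, (j < m)%nat -> div_root q z0 j = RtoC 0) /\
  div_root q z0 m = Cdiv (q m) (Copp z0).
Proof.
  intros Hq. split.
  - intros j Hj. unfold div_root. rewrite csum_eq_0; [unfold Cdiv; ring|].
    intros k Hk. unfold pterm. rewrite Hq by lia. ring.
  - unfold div_root. destruct m as [|m].
    + unfold pterm. simpl. field. auto.
    + cbn [csum]. rewrite csum_eq_0 by (intros k Hk; unfold pterm; rewrite Hq by lia; ring).
      unfold pterm. assert (Cpow z0 m <> RtoC 0) by (apply Cpow_nz; auto).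
      simpl Cpow. field. split; auto.
Qed.

Hypothesis Hroot : pser q z0 = RtoC 0.

Lemma div_root_coef_le sigma B k : coef_bound q (2 * sigma) B -> 0 < sigma -> Cmod z0 <= sigma ->
  Cmod (div_root q z0 k) <= 4 * B / (2 * sigma) ^ S k.
Proof.
  intros HB Hs Hz.
  assert (Ht := pser_tail_le q z0 sigma B k Hs Hz HB).
  rewrite Hroot in Ht.
  replace (Cminus (RtoC 0) (csum (pterm q z0) k)) with (Copp (csum (pterm q z0) k)) in Ht by ring.
  unfold div_root. rewrite Cmod_div, Cmod_pow by (apply Cpow_nz; auto).
  assert (Hp1 : 0 < Cmod z0 ^ S k) by (apply pow_lt, Cmod_gt_0; auto).
  assert (Hp2 : 0 < (2 * sigma) ^ S k) by (apply pow_lt; lra).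
  unfold Rdiv in Ht. rewrite Rpow_mult_distr, pow_inv in Ht.
  apply Rmult_le_reg_r with (Cmod z0 ^ S k); auto.
  unfold Rdiv. rewrite Rmult_assoc, Rinv_l, Rmult_1_r by lra.
  replace (4 * B * / (2 * sigma) ^ S k * Cmod z0 ^ S k)
    with (4 * B * (Cmod z0 ^ S k * / (2 * sigma) ^ S k)) by ring.
  exact Ht.
Qed.

Hypothesis Hq : coefs_bounded q.

Lemma div_root_bounded : coefs_bounded (div_root q z0).
Proof.
  intros rho Hr. set (sigma := rho + Cmod z0 + 1). assert (Hz := Cmod_ge_0 z0).
  destruct (Hq (2 * sigma)) as [B HB]; [unfold sigma; lra|].
  assert (HB0 := coef_bound_nonneg _ _ _ HB).
  exists (4 * B). intros k.
  assert (H := div_root_coef_le sigma B k HB ltac:(unfold sigma; lra) ltac:(unfold sigma; lra)).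
  assert (Hp2 : 0 < (2 * sigma) ^ S k) by (apply pow_lt; unfold sigma; lra).
  assert (Hrk : rho ^ k <= (2 * sigma) ^ S k).
  { simpl. assert (rho ^ k <= (2 * sigma) ^ k) by (apply pow_incr; unfold sigma; lra).
    assert (0 <= rho ^ k) by (apply pow_le; lra). unfold sigma in *. nra. }
  assert (0 <= rho ^ k) by (apply pow_le; lra).
  eapply Rle_trans; [apply Rmult_le_compat_r; [auto | exact H]|].
  unfold Rdiv. rewrite Rmult_assoc. rewrite <- (Rmult_1_r (4 * B)) at 2.
  apply Rmult_le_compat_l; [lra|].
  apply Rmult_le_reg_l with ((2 * sigma) ^ S k); auto.
  rewrite <- Rmult_assoc, Rinv_r by lra. lra.
Qed.

Lemma pser_div_root z : pser q z = Cmult (Cminus z z0) (pser (div_root q z0) z).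
Proof.
  set (sigma := Cmod z + Cmod z0 + 1). assert (Hz := Cmod_ge_0 z0). assert (Hz' := Cmod_ge_0 z).
  destruct (Hq (2 * sigma)) as [B HB]; [unfold sigma; lra|].
  assert (HB0 := coef_bound_nonneg _ _ _ HB).
  destruct (pser_csum_approx _ div_root_bounded (Cmod z) Hz') as [c [_ HA]].
  symmetry. apply (pser_eq_of_approx q Hq z _ (Cmod (Cminus z z0) * c + 4 * B) O).
  intros N _. rewrite csum_div_root.
  replace (Cminus (Cmult (Cminus z z0) (pser (div_root q z0) z))
     (Cminus (Cmult (Cminus z z0) (csum (pterm (div_root q z0) z) N))
             (Cmult (div_root q z0 N) (Cpow z (S N)))))
   with (Cplus (Cmult (Cminus z z0) (Cminus (pser (div_root q z0) z)
                                            (csum (pterm (div_root q z0) z) N)))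
               (Cmult (div_root q z0 N) (Cpow z (S N)))) by ring.
  eapply Rle_trans; [apply Cmod_triangle|]. rewrite !Cmod_mult, Cmod_pow.
  assert (H1 := HA z (Rle_refl _) N).
  assert (H2 := div_root_coef_le sigma B N HB ltac:(unfold sigma; lra) ltac:(unfold sigma; lra)).
  assert (Hp2 : 0 < (2 * sigma) ^ S N) by (apply pow_lt; unfold sigma; lra).
  assert (H3 : Cmod z ^ S N / (2 * sigma) ^ S N <= (1/2) ^ N).
  { unfold Rdiv. rewrite <- pow_inv, <- Rpow_mult_distr. apply pow_S_le_half_pow. split.
    - apply Rmult_le_pos; auto. apply Rlt_le, Rinv_0_lt_compat; unfold sigma; lra.
    - apply Rmult_le_reg_r with (2 * sigma); [unfold sigma; lra|].
      rewrite Rmult_assoc, Rinv_l by (unfold sigma; lra). unfold sigma; lra. }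
  assert (H4 : Cmod (div_root q z0 N) * Cmod z ^ S N <= 4 * B * (1/2) ^ N).
  { eapply Rle_trans; [apply Rmult_le_compat_r; [apply pow_le; auto | exact H2]|].
    unfold Rdiv. rewrite Rmult_assoc. apply Rmult_le_compat_l; [lra|].
    rewrite Rmult_comm. exact H3. }
  assert (H5 : Cmod (Cminus z z0) * Cmod (Cminus (pser (div_root q z0) z)
                                                  (csum (pterm (div_root q z0) z) N))
               <= Cmod (Cminus z z0) * (c * (1/2) ^ N))
    by (apply Rmult_le_compat_l; auto; apply Cmod_ge_0).
  lra.
Qed.

End Division_by_root.

Lemma exists_unit_pow_scal (D : C) K : (0 < K)%nat ->
  exists u, Cmod u = 1 /\ Cmult (Cpow u K) (RtoC (Cmod D)) = D.
Proof.
  intros HK. destruct (polar D) as [phi [_ Hphi]].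
  exists (circ 1 (phi / INR K)). split; [rewrite Cmod_circ; apply Rabs_R1|].
  rewrite circ_pow. replace (INR K * (phi / INR K)) with phi by (field; apply not_0_INR; lia).
  rewrite Hphi at 2. rewrite (circ_scal (Cmod D)). ring.
Qed.

Lemma exists_unit_align (w b : C) K : (0 < K)%nat -> w <> RtoC 0 -> b <> RtoC 0 ->
  exists u d, Cmod u = 1 /\ 0 < d /\ Cmult (Cpow u K) b = Cdiv w (RtoC d).
Proof.
  intros HK Hw Hb. set (D := Cdiv w b).
  assert (Hd : 0 < Cmod D)
    by (unfold D; rewrite Cmod_div by auto; apply Rdiv_lt_0_compat; apply Cmod_gt_0; auto).
  assert (HdC : RtoC (Cmod D) <> RtoC 0) by (intros E; apply RtoC_inj in E; lra).
  destruct (exists_unit_pow_scal D K HK) as [u [Hu HuD]].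
  exists u, (Cmod D). split; [auto | split; [auto|]].
  transitivity (Cmult (Cdiv (Cmult (Cpow u K) (RtoC (Cmod D))) (RtoC (Cmod D))) b);
    [field; auto|].
  rewrite HuD. unfold D. field. auto.
Qed.

Lemma exists_pos_below (x1 x2 x3 x4 : R) : 0 < x1 -> 0 < x2 -> 0 < x3 -> 0 < x4 ->
  exists t, 0 < t /\ t <= x1 /\ t <= x2 /\ t < x3 /\ t <= x4.
Proof.
  intros H1 H2 H3 H4. exists (Rmin (Rmin x1 x2) (Rmin (x3 / 2) x4)).
  assert (Hm1 := Rmin_l (Rmin x1 x2) (Rmin (x3 / 2) x4)).
  assert (Hm2 := Rmin_r (Rmin x1 x2) (Rmin (x3 / 2) x4)).
  assert (Hm3 := Rmin_l x1 x2). assert (Hm4 := Rmin_r x1 x2).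
  assert (Hm5 := Rmin_l (x3 / 2) x4). assert (Hm6 := Rmin_r (x3 / 2) x4).
  split; [repeat apply Rmin_pos; lra | lra].
Qed.

Lemma Cmod_lt_of_perturb (X Y W : C) (s : R) : 0 <= s ->
  X = Cplus (Cmult Y (RtoC (1 + s))) W -> Cmod W < s * Cmod Y -> Cmod Y < Cmod X.
Proof.
  intros Hs -> HW.
  assert (T := Cmod_triangle (Cplus (Cmult Y (RtoC (1 + s))) W) (Copp W)).
  replace (Cplus (Cplus (Cmult Y (RtoC (1 + s))) W) (Copp W)) with (Cmult Y (RtoC (1 + s))) in T
    by ring.
  rewrite Cmod_opp, Cmod_mult, Cmod_R, Rabs_pos_eq in T by lra. lra.
Qed.

Lemma perturb_decomp (g b u e1 w w0 : C) (t d : R) K : d <> 0 ->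
  Cmult (Cpow u K) b = Cdiv (Cmult w0 g) (RtoC d) ->
  Cplus (Cmult g w) (Cmult (Cpow (Cmult (RtoC t) u) K) (Cplus b e1))
  = Cplus (Cmult (Cmult g w) (RtoC (1 + t ^ K / d)))
          (Cmult (RtoC (t ^ K))
                 (Cminus (Cmult (Cpow u K) e1) (Cdiv (Cmult g (Cminus w w0)) (RtoC d)))).
Proof.
  intros Hd Hub. assert (HdC : RtoC d <> RtoC 0) by (intros E; apply RtoC_inj in E; lra).
  rewrite Cpow_mult_l, <- RtoC_pow, RtoC_plus, RtoC_div by auto.
  replace (Cmult (Cmult (RtoC (t ^ K)) (Cpow u K)) (Cplus b e1))
    with (Cplus (Cmult (RtoC (t ^ K)) (Cmult (Cpow u K) b))
                (Cmult (Cmult (RtoC (t ^ K)) (Cpow u K)) e1)) by ring.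
  rewrite Hub. field. auto.
Qed.

Lemma perturb_term_lt (u e1 e2 g w : C) (t d L L2 : R) K :
  (0 < K)%nat -> 0 < t <= 1 -> 0 < d -> Cmod u = 1 ->
  Cmod e1 <= L * t -> Cmod e2 <= L2 * t ->
  t * (L + Cmod g * L2 / d) < Cmod g * Cmod w / d ->
  Cmod (Cmult (RtoC (t ^ K)) (Cminus (Cmult (Cpow u K) e1) (Cdiv (Cmult g e2) (RtoC d))))
  < t ^ K / d * Cmod (Cmult g w).
Proof.
  intros HK Ht Hd Hu He1 He2 Hsmall.
  assert (HdC : RtoC d <> RtoC 0) by (intros E; apply RtoC_inj in E; lra).
  assert (HtK : 0 < t ^ K) by (apply pow_lt; lra).
  rewrite Cmod_mult, Cmod_R, Rabs_pos_eq by lra.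
  replace (t ^ K / d * Cmod (Cmult g w)) with (t ^ K * (Cmod g * Cmod w / d))
    by (rewrite Cmod_mult; field; lra).
  apply Rmult_lt_compat_l; auto.
  eapply Rle_lt_trans; [|exact Hsmall].
  unfold Cminus. eapply Rle_trans; [apply Cmod_triangle|].
  rewrite Cmod_opp, Cmod_mult, Cmod_pow, Hu, pow1, Cmod_div, Cmod_mult, Cmod_R, Rabs_pos_eq
    by (auto || lra).
  assert (Cmod g * Cmod e2 / d <= Cmod g * (L2 * t) / d).
  { unfold Rdiv. apply Rmult_le_compat_r; [apply Rlt_le, Rinv_0_lt_compat; auto|].
    apply Rmult_le_compat_l; [apply Cmod_ge_0 | auto]. }
  replace (t * (L + Cmod g * L2 / d)) with (L * t + Cmod g * (L2 * t) / d) by (field; lra).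
  lra.
Qed.

(* Near a point where [F - g z^n] has a zero of exact order [K], moving from [z0]
   in the direction that aligns [(z - z0)^K Q(z0)] with [g z0^n] makes [|F|]
   exceed [|g| |z|^n]. *)
Lemma exists_modulus_gt_monomial (F Q : C -> C) (g z0 : C) n K L delta :
  (0 < K)%nat -> g <> RtoC 0 -> z0 <> RtoC 0 -> Q z0 <> RtoC 0 -> 0 <= L -> 0 < delta ->
  (forall z, Cmod (Cminus z z0) <= 1 -> Cmod (Cminus (Q z) (Q z0)) <= L * Cmod (Cminus z z0)) ->
  (forall z, F z = Cplus (Cmult g (Cpow z n)) (Cmult (Cpow (Cminus z z0) K) (Q z))) ->
  exists z, Cmod (Cminus z z0) < delta /\ Cmod g * Cmod z ^ n < Cmod (F z).
Proof.
  intros HK Hg Hz0 Hb HL Hdelta HQ HF. set (b := Q z0) in *.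
  assert (Hg0 := proj1 (Cmod_gt_0 g) Hg). assert (Hr0 := proj1 (Cmod_gt_0 z0) Hz0).
  destruct (exists_unit_align (Cmult (Cpow z0 n) g) b K HK) as [u [d [Hu [Hd Hub]]]];
    [apply Cmult_neq_0; [apply Cpow_nz|]; auto | auto|].
  set (rho := Cmod z0 + 1). set (L2 := INR n * rho ^ n).
  set (A := Cmod g * (Cmod z0 / 2) ^ n / d).
  assert (HA : 0 < A)
    by (apply Rdiv_lt_0_compat; auto; apply Rmult_lt_0_compat; auto; apply pow_lt; lra).
  set (Lc := L + Cmod g * L2 / d).
  assert (HLc : 0 <= Lc).
  { assert (0 <= L2) by (apply Rmult_le_pos; [apply pos_INR | apply pow_le; unfold rho; lra]).
    apply Rplus_le_le_0_compat; auto. apply Rdiv_le_0_compat; [apply Rmult_le_pos|]; lra. }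
  destruct (exists_pos_below 1 (Cmod z0 / 2) delta (A / (2 * (Lc + 1))))
    as [t [Ht [Ht1 [Ht2 [Ht3 Ht4]]]]]; try apply Rdiv_lt_0_compat; try lra.
  assert (Hsmall : t * Lc < A).
  { apply Rmult_le_compat_r with (r := Lc + 1) in Ht4; [|lra].
    replace (A / (2 * (Lc + 1)) * (Lc + 1)) with (A / 2) in Ht4 by (field; lra). nra. }
  set (zt := Cplus z0 (Cmult (RtoC t) u)).
  assert (Hdist : Cmod (Cminus zt z0) = t).
  { unfold zt. replace (Cminus (Cplus z0 (Cmult t u)) z0) with (Cmult (RtoC t) u) by ring.
    rewrite Cmod_mult, Hu, Cmod_R, Rabs_pos_eq; lra. }
  assert (Hzt : Cmod z0 - t <= Cmod zt <= Cmod z0 + t).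
  { assert (T := Rabs_Cmod_sub_le zt z0). rewrite Hdist in T. apply Rabs_le_between in T. lra. }
  exists zt. split; [lra|].
  rewrite <- Cmod_pow, <- Cmod_mult.
  eapply (Cmod_lt_of_perturb _ _ _ (t ^ K / d)); [apply Rdiv_le_0_compat; [apply pow_le|]; lra| |].
  - rewrite HF. replace (Cminus zt z0) with (Cmult (RtoC t) u) by (unfold zt; ring).
    replace (Q zt) with (Cplus b (Cminus (Q zt) b)) by ring.
    apply perturb_decomp; [lra | exact Hub].
  - apply (perturb_term_lt u _ _ g _ t d L L2 K HK ltac:(lra) Hd Hu).
    + rewrite <- Hdist. apply HQ. lra.
    + rewrite <- Hdist. apply Cpow_sub_le; unfold rho; lra.
    + assert (Hzn : (Cmod z0 / 2) ^ n <= Cmod zt ^ n) by (apply pow_incr; lra).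
      assert (A <= Cmod g * Cmod zt ^ n / d).
      { unfold A, Rdiv. apply Rmult_le_compat_r; [apply Rlt_le, Rinv_0_lt_compat; auto|].
        apply Rmult_le_compat_l; lra. }
      rewrite Cmod_pow. fold Lc. lra.
Qed.

Section Annulus_maximum.

Variables (a : nat -> C) (n : nat) (g z0 : C) (r1 r2 : R).
Hypotheses (Ha : coefs_bounded a) (Hg : g <> RtoC 0)
  (Hr1 : 0 < r1) (Hz1 : r1 < Cmod z0) (Hz2 : Cmod z0 < r2)
  (Hmax : forall z, r1 <= Cmod z <= r2 -> Cmod (pser a z) <= Cmod g * Cmod z ^ n)
  (Hroot : pser (sub_monomial a g n) z0 = RtoC 0).

Let Hz0 : z0 <> RtoC 0.
Proof. intros E. rewrite E, Cmod_0 in Hz1. lra. Qed.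

Lemma factor_root_of_annulus_max K Q : (0 < K)%nat -> coefs_bounded Q ->
  (forall z, pser (sub_monomial a g n) z = Cmult (Cpow (Cminus z z0) K) (pser Q z)) ->
  pser Q z0 = RtoC 0.
Proof.
  intros HK HQ HE. apply NNPP. intros Hb.
  destruct (pser_lipschitz Q HQ (Cmod z0 + 1)) as [L [HL Hlip]];
    [generalize (Cmod_ge_0 z0); lra|].
  assert (Hclose : forall z, Cmod (Cminus z z0) <= 1 -> Cmod z <= Cmod z0 + 1).
  { intros z Hz. generalize (Rabs_Cmod_sub_le z z0). intros T.
    apply Rabs_le_between in T. lra. }
  destruct (exists_modulus_gt_monomial (pser a) (pser Q) g z0 n K L
              (Rmin (Cmod z0 - r1) (r2 - Cmod z0)) HK Hg Hz0 Hb HL)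
    as [z [Hz Hgt]].
  - apply Rmin_pos; lra.
  - intros z Hz. apply Hlip; [apply Hclose; auto | lra].
  - intros z. rewrite <- HE, pser_sub_monomial by auto. ring.
  - assert (T := Rabs_Cmod_sub_le z z0). apply Rabs_le_between in T.
    assert (Hm1 := Rmin_l (Cmod z0 - r1) (r2 - Cmod z0)).
    assert (Hm2 := Rmin_r (Cmod z0 - r1) (r2 - Cmod z0)).
    specialize (Hmax z ltac:(lra)). lra.
Qed.

(* Repeated division by [z - z0] never stops: the zero of [f - g z^n] at [z0] has infinite order. *)
Lemma factor_pow_of_annulus_max m : (forall j, (j < m)%nat -> sub_monomial a g n j = RtoC 0) ->
  forall K, exists Q, coefs_bounded Q /\
    (forall z, pser (sub_monomial a g n) z = Cmult (Cpow (Cminus z z0) K) (pser Q z)) /\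
    (forall j, (j < m)%nat -> Q j = RtoC 0) /\
    Q m = Cdiv (sub_monomial a g n m) (Cpow (Copp z0) K).
Proof.
  intros Hlow K. induction K as [|K [Q [HQ [Hid [Hl Hm]]]]].
  - exists (sub_monomial a g n). split; [apply sub_monomial_bounded; auto|].
    split; [intros z; simpl; ring|]. split; auto. simpl. field.
  - assert (HQ0 : pser Q z0 = RtoC 0).
    { destruct K as [|K].
      - rewrite <- Hroot, Hid. simpl. ring.
      - apply (factor_root_of_annulus_max (S K)); auto. lia. }
    destruct (div_root_low_coefs Q z0 Hz0 m Hl) as [Hl' Hm'].
    exists (div_root Q z0). split; [apply div_root_bounded; auto|].
    split; [intros z; rewrite Hid, (pser_div_root Q z0) by auto; simpl Cpow; ring|].
    split; auto. rewrite Hm', Hm. simpl Cpow.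
    assert (Hnz : Copp z0 <> RtoC 0) by (intros E; apply Hz0;
      replace z0 with (Copp (Copp z0)) by ring; rewrite E; ring).
    assert (Cpow (Copp z0) K <> RtoC 0) by (apply Cpow_nz; auto).
    field. split; auto.
Qed.

End Annulus_maximum.

(* Cauchy's estimate for [Q] on the circle of radius [3 |z0|], where [|z - z0| >= 2 |z0|]. *)
Lemma coef_le_of_factor_pow E Q z0 m K Be : z0 <> RtoC 0 -> coefs_bounded Q ->
  (forall z, Cmod z <= 3 * Cmod z0 -> Cmod (pser E z) <= Be) ->
  (forall z, pser E z = Cmult (Cpow (Cminus z z0) K) (pser Q z)) ->
  Q m = Cdiv (E m) (Cpow (Copp z0) K) ->
  Cmod (E m) * (3 * Cmod z0) ^ m * 2 ^ K <= Be.
Proof.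
  intros Hz0 HQ HBe Hid HQm. assert (Hr := proj1 (Cmod_gt_0 z0) Hz0).
  set (R := 3 * Cmod z0).
  assert (Hp : 0 < (2 * Cmod z0) ^ K) by (apply pow_lt; lra).
  assert (Hbnd : forall t, Cmod (pser Q (circ R t)) <= Be / (2 * Cmod z0) ^ K).
  { intros t. assert (H := HBe (circ R t)).
    rewrite Cmod_circ, Rabs_pos_eq in H by (unfold R; lra).
    specialize (H (Rle_refl _)). rewrite Hid, Cmod_mult, Cmod_pow in H.
    assert (Hd : 2 * Cmod z0 <= Cmod (Cminus (circ R t) z0)).
    { assert (T := Rabs_Cmod_sub_le (circ R t) z0). apply Rabs_le_between in T.
      rewrite Cmod_circ, Rabs_pos_eq in T by (unfold R; lra). unfold R in *. lra. }
    assert (Hdk : (2 * Cmod z0) ^ K <= Cmod (Cminus (circ R t) z0) ^ K)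
      by (apply pow_incr; lra).
    apply Rmult_le_reg_l with ((2 * Cmod z0) ^ K); auto.
    unfold Rdiv. rewrite (Rmult_comm Be), <- Rmult_assoc, Rinv_r, Rmult_1_l by lra.
    eapply Rle_trans; [|exact H]. apply Rmult_le_compat_r; auto. apply Cmod_ge_0. }
  assert (Hcy := cauchy_estimate Q R _ m HQ ltac:(unfold R; lra) Hbnd).
  rewrite HQm, Cmod_div, Cmod_pow, Cmod_opp in Hcy by (apply Cpow_nz; intros E0; apply Hz0;
    replace z0 with (Copp (Copp z0)) by ring; rewrite E0; ring).
  rewrite Rpow_mult_distr in Hp, Hcy.
  assert (0 < Cmod z0 ^ K) by (apply pow_lt; lra). assert (0 < 2 ^ K) by (apply pow_lt; lra).
  apply Rmult_le_compat_r with (r := 2 ^ K * Cmod z0 ^ K) in Hcy; [|nra].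
  replace (Cmod (E m) / Cmod z0 ^ K * R ^ m * (2 ^ K * Cmod z0 ^ K))
    with (Cmod (E m) * R ^ m * 2 ^ K) in Hcy by (field; lra).
  replace (Be / (2 ^ K * Cmod z0 ^ K) * (2 ^ K * Cmod z0 ^ K)) with Be in Hcy by (field; lra).
  exact Hcy.
Qed.

Lemma coef_eq_0_of_factor_pow E z0 m : coefs_bounded E -> z0 <> RtoC 0 ->
  (forall K, exists Q, coefs_bounded Q /\
     (forall z, pser E z = Cmult (Cpow (Cminus z z0) K) (pser Q z)) /\
     Q m = Cdiv (E m) (Cpow (Copp z0) K)) ->
  E m = RtoC 0.
Proof.
  intros HE Hz0 Hfac. apply NNPP. intros Hm.
  assert (Hr := proj1 (Cmod_gt_0 z0) Hz0). assert (Hc := proj1 (Cmod_gt_0 _) Hm).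
  destruct (pser_bounded E HE (3 * Cmod z0) ltac:(lra)) as [Be HBe].
  set (c := Cmod (E m) * (3 * Cmod z0) ^ m).
  assert (Hc0 : 0 < c) by (apply Rmult_lt_0_compat; auto; apply pow_lt; lra).
  destruct (pow2_gt (Be / c)) as [K HK].
  destruct (Hfac K) as [Q [HQ [Hid HQm]]].
  assert (Hle := coef_le_of_factor_pow E Q z0 m K Be Hz0 HQ HBe Hid HQm). fold c in Hle.
  apply Rmult_lt_compat_r with (r := c) in HK; auto.
  replace (Be / c * c) with Be in HK by (field; lra).
  lra.
Qed.

Lemma exists_interior_max (f : R -> R) r1 r2 : r1 < r2 ->
  (forall x, r1 <= x <= r2 -> continuity_pt f x) ->
  f r1 = f r2 -> (forall x, r1 <= x <= r2 -> f r1 <= f x) ->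
  exists r0, r1 < r0 < r2 /\ forall x, r1 <= x <= r2 -> f x <= f r0.
Proof.
  intros Hr Hc Heq Hmin.
  destruct (continuity_ab_maj f r1 r2) as [x0 [Hx0 Hrx0]]; [lra | auto|].
  destruct (Rlt_dec r1 x0); [destruct (Rlt_dec x0 r2)|].
  - exists x0. split; [lra | auto].
  - (* the maximum is at an endpoint, where [f] is minimal: [f] is constant *)
    exists ((r1 + r2) / 2). split; [lra|]. intros x Hx.
    replace x0 with r2 in Hx0 by lra. specialize (Hx0 x Hx).
    specialize (Hmin ((r1 + r2) / 2) ltac:(lra)). lra.
  - exists ((r1 + r2) / 2). split; [lra|]. intros x Hx.
    replace x0 with r1 in Hx0 by lra. specialize (Hx0 x Hx).
    specialize (Hmin ((r1 + r2) / 2) ltac:(lra)). lra.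
Qed.

Lemma maxmod_le_of_growth_ratio_le a n r0 z : coefs_bounded a -> 0 < Cmod z ->
  growth_ratio a n (Cmod z) <= growth_ratio a n r0 ->
  Cmod (pser a z) <= growth_ratio a n r0 * Cmod z ^ n.
Proof.
  intros Ha Hz Hle. destruct (polar z) as [phi [_ Hphi]].
  rewrite Hphi at 1. eapply Rle_trans; [apply maxmod_ub; auto|].
  assert (Hzn : 0 < Cmod z ^ n) by (apply pow_lt; auto).
  unfold growth_ratio in Hle.
  apply Rmult_le_compat_r with (r := Cmod z ^ n) in Hle; [|lra].
  unfold Rdiv at 1 in Hle. rewrite Rmult_assoc, Rinv_l, Rmult_1_r in Hle by lra. exact Hle.
Qed.

Lemma exists_first_nonzero_coef (e : nat -> C) k : e k <> RtoC 0 ->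
  exists m, e m <> RtoC 0 /\ forall j, (j < m)%nat -> e j = RtoC 0.
Proof.
  intros Hk.
  destruct (dec_inh_nat_subset_has_unique_least_element (fun j => e j <> RtoC 0)
              (fun j => classic _) (ex_intro _ k Hk)) as [m [[Hm Hleast] _]].
  exists m. split; auto. intros j Hj. apply NNPP. intros Hj'. specialize (Hleast j Hj'). lia.
Qed.

Lemma rdiamond_lt_absurd a n r1 r2 : coefs_bounded a -> transcendental_coeffs a ->
  r1 < r2 -> is_rdiamond a n r1 -> is_rdiamond a n r2 -> False.
Proof.
  intros Ha Ht Hr12 [Hr1 Hm1] [Hr2 Hm2].
  fold (growth_ratio a n r1) in Hm1. fold (growth_ratio a n r2) in Hm2.
  destruct (Ht (S n)) as [k [Hk Hak]].
  destruct (exists_interior_max (growth_ratio a n) r1 r2 Hr12) as [r0 [Hr0 Hr0max]].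
  - intros x Hx. apply growth_ratio_continuous; auto. lra.
  - apply Rle_antisym; [apply Hm1 | apply Hm2]; lra.
  - intros x Hx. apply Hm1. lra.
  - destruct (maxmod_attained a Ha r0 ltac:(lra)) as [t0 Ht0].
    set (z0 := circ r0 t0) in *.
    assert (Hz0m : Cmod z0 = r0) by (unfold z0; rewrite Cmod_circ, Rabs_pos_eq; lra).
    assert (Hz0 : z0 <> RtoC 0) by (intros E; rewrite E, Cmod_0 in Hz0m; lra).
    assert (Hz0n : Cpow z0 n <> RtoC 0) by (apply Cpow_nz; auto).
    set (g := Cdiv (pser a z0) (Cpow z0 n)).
    assert (Hgm : Cmod g = growth_ratio a n r0)
      by (unfold g, growth_ratio; rewrite Cmod_div, Cmod_pow, Hz0m, Ht0 by auto; auto).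
    assert (Hg : g <> RtoC 0).
    { apply Cmod_gt_0. rewrite Hgm. apply Rdiv_lt_0_compat;
        [apply (maxmod_pos a Ha r0 k) | apply pow_lt]; auto; lra. }
    set (E := sub_monomial a g n).
    assert (HEk : E k <> RtoC 0).
    { unfold E, sub_monomial. destruct (Nat.eq_dec k n); [lia|].
      replace (Cminus (a k) 0) with (a k) by ring. auto. }
    destruct (exists_first_nonzero_coef E k HEk) as [m [Hm Hlow]].
    apply Hm, (coef_eq_0_of_factor_pow E z0 m); [apply sub_monomial_bounded; auto | auto|].
    intros K.
    destruct (factor_pow_of_annulus_max a n g z0 r1 r2 Ha Hg Hr1 ltac:(lra) ltac:(lra))
      with (m := m) (K := K) as [Q [HQ [Hid [_ HQm]]]]; auto.
    + intros z Hz. rewrite Hgm.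
      apply maxmod_le_of_growth_ratio_le; [auto | lra | apply Hr0max; lra].
    + unfold E in *. rewrite pser_sub_monomial by auto. unfold g. field. auto.
    + exists Q. auto.
Qed.

Lemma rdiamond_unique a n r1 r2 : coefs_bounded a -> transcendental_coeffs a ->
  is_rdiamond a n r1 -> is_rdiamond a n r2 -> r1 = r2.
Proof.
  intros Ha Ht H1 H2.
  destruct (Rtotal_order r1 r2) as [Hlt|[Heq|Hgt]]; auto; exfalso.
  - exact (rdiamond_lt_absurd a n r1 r2 Ha Ht Hlt H1 H2).
  - exact (rdiamond_lt_absurd a n r2 r1 Ha Ht Hgt H2 H1).
Qed.

Theorem theorem7p3 (a : nat -> C) (n0 : nat) :
  entire_coeffs a ->
  transcendental_coeffs a ->
  first_nonzero a n0 ->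
  (forall n : nat, (n0 < n)%nat -> exists! r : R, is_rdiamond a n r) /\
  (forall rd : nat -> R,
     (forall n : nat, (n0 < n)%nat -> is_rdiamond a n (rd n)) ->
     (forall n : nat, (n0 < n)%nat -> rd n <= rd (S n)) /\
     is_lim_seq rd p_infty).
Proof.
  intros Hent Ht [Hn0 _]. assert (Ha := entire_coefs_bounded a Hent).
  assert (Hincr : forall rd, (forall n, (n0 < n)%nat -> is_rdiamond a n (rd n)) ->
                    forall n, (n0 < n)%nat -> rd n <= rd (S n))
    by (intros rd Hrd n Hn; apply (rdiamond_le_succ a n0 n); auto).
  split.
  - intros n Hn. destruct (rdiamond_exists a n0 n Ha Ht Hn0 Hn) as [r Hr].
    exists r. split; auto. intros r' Hr'. apply (rdiamond_unique a n); auto.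
  - intros rd Hrd. split; [apply Hincr; auto|].
    apply (is_lim_seq_p_infty_of_incr rd n0); [apply Hincr; auto|].
    apply (rdiamond_unbounded a n0); auto.
Qed.
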